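(* Let $V\subset\mathcal{A}_0$ be compact and let $V^T$ be complete. Then for every continuous linear functional $\lambda$ on $\mathcal{A}$, with $\lambda:=g$, $$\lambda(V)=\bigcup_{f\in\mathrm{bor}(V)}(f*g)(\overline D),\qquad \partial\lambda(V)\subset\bigcup_{f\in\mathrm{bor}(V)}(f*g)(\partial D).$$
   Context: $D=\{z:|z|<1\}$, $\overline D$ its closure, $\partial D$ the unit circle. $\mathcal{A}$ is the space of functions $f(z)=\sum_{k\ge0}a_k(f)z^k$ analytic in $D$, with the topology of locally uniform convergence; $\mathcal{A}_0=\{f\in\mathcal{A}: a_0(f)=1\}$. $\mathcal{A}(\overline D)$ is the set of functions analytic in some disk $\{|z|<R\}$ with $R>1$, and $\mathcal{A}_0(\overline D)=\{g\in\mathcal{A}(\overline D):a_0(g)=1\}$. The Hadamard product is $(f*g)(z)=\sum_{k\ge0}a_k(f)a_k(g)z^k$. Every continuous linear functional $\lambda$ on $\mathcal{A}$ has the form $\lambda(f)=(f*g)(1)$ for a function $g\in\mathcal{A}(\overline D)$; this is written $\lambda:=g$. $V^T=\{g\in\mathcal{A}_0(\overline D): (f*g)(1)\ne0 \ \forall f\in V\}$. For $x\in\overline D$, $(P_xf)(z)=f(xz)$; a set $W$ is complete if $P_xf\in W$ for all $f\in W$, $x\in\overline D$. Let $e\equiv1$. If $V\ne\{e\}$, an element $f\in V$ is a border element of $V$ if whenever $f=P_xg$ with $g\in V$, $x\in\overline D$, then $|x|=1$; $\mathrm{bor}(V)$ is the set of border elements. If $V=\{e\}$, $\mathrm{bor}(V)=\{e\}$.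 *)

From Stdlib Require Import Reals List.
From Coquelicot Require Import Coquelicot.
Open Scope R_scope.

(* A function f(z) = sum_k a_k z^k is represented by its coefficient sequence. *)
Definition coef := nat -> C.

Definition is_sum (u : nat -> C) (w : C) : Prop :=
  is_series (u : nat -> C_NormedModule) w.

Definition eval (a : coef) (z w : C) : Prop :=
  is_sum (fun k => (a k * Cpow z k)%C) w.

(* A : analytic in D  <=> radius of convergence >= 1 *)
Definition in_A (a : coef) : Prop :=
  forall r : R, 0 <= r < 1 -> ex_series (fun k => Cmod (a k) * r ^ k).
Definition in_A0 (a : coef) : Prop := in_A a /\ a 0%nat = 1%C.

(* A(closed D) : analytic in some disk |z| < R with R > 1 *)
Definition in_Abar (b : coef) : Prop :=
  exists R0 : R, 1 < R0 /\ ex_series (fun k => Cmod (b k) * R0 ^ k).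
Definition in_Abar0 (b : coef) : Prop := in_Abar b /\ b 0%nat = 1%C.

Definition hadamard (a b : coef) : coef := fun k => (a k * b k)%C.

(* (P_x f)(z) = f(xz) *)
Definition Pmap (x : C) (a : coef) : coef := fun k => (a k * Cpow x k)%C.

Definition e_one : coef := fun k => match k with O => 1%C | S _ => 0%C end.

(* Topology of locally uniform convergence on A: basic neighbourhoods
   { g : |f(z) - g(z)| < eps for all |z| <= r }, 0 <= r < 1, eps > 0. *)
Definition lu_near (f : coef) (r eps : R) (g : coef) : Prop :=
  forall z u v, Cmod z <= r -> eval f z u -> eval g z v -> Cmod (u - v)%C < eps.

Definition lu_open (U : coef -> Prop) : Prop :=
  forall f, in_A f -> U f ->
    exists r eps, 0 <= r < 1 /\ 0 < eps /\
      forall g, in_A g -> lu_near f r eps g -> U g.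

Definition lu_compact (V : coef -> Prop) : Prop :=
  (forall f, V f -> in_A f) /\
  forall (I : Type) (U : I -> coef -> Prop),
    (forall i, lu_open (U i)) ->
    (forall f, V f -> exists i, U i f) ->
    exists l : list I, forall f, V f -> exists i, In i l /\ U i f.

Definition dualT (V : coef -> Prop) (g : coef) : Prop :=
  in_Abar0 g /\ forall f, V f -> forall w, eval (hadamard f g) 1%C w -> w <> 0%C.

Definition complete (W : coef -> Prop) : Prop :=
  forall f x, W f -> Cmod x <= 1 -> W (Pmap x f).

Definition is_singleton_e (V : coef -> Prop) : Prop :=
  forall h, V h <-> h = e_one.

Definition bor (V : coef -> Prop) (f : coef) : Prop :=
  (is_singleton_e V /\ f = e_one) \/
  (~ is_singleton_e V /\ V f /\
     forall g x, V g -> Cmod x <= 1 -> f = Pmap x g -> Cmod x = 1).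

(* lambda(V) for lambda := g, i.e. lambda(f) = (f*g)(1) *)
Definition lam_image (V : coef -> Prop) (g : coef) (w : C) : Prop :=
  exists f, V f /\ eval (hadamard f g) 1%C w.

Definition boundaryC (S : C -> Prop) (w : C) : Prop :=
  forall eps : R, 0 < eps ->
    (exists u, S u /\ Cmod (u - w)%C < eps) /\
    (exists u, ~ S u /\ Cmod (u - w)%C < eps).

From Stdlib Require Import Reals Rtopology List Arith Lra Lia Psatz.
From Stdlib Require Import Classical ClassicalEpsilon IndefiniteDescription FunctionalExtensionality.
From Coquelicot Require Import Coquelicot.
Open Scope R_scope.

(** Each [f] in the compact set [V] can be written [P_x h] with [h] in [V] and [|x|] minimal;
    then [h] is a border element and [lambda(f) = (h * g)(x)], which gives one inclusion.
    Conversely, if a value [w = (f * g)(z)] of a border element were missing from [lambda(V)],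
    the normalisation of [g - w e] would belong to [V^T], and by completeness so would its
    image under [P_z], which vanishes at [f]; the exceptional value [w = g_0] is reached along
    the path [t |-> (f * g)(t)], [0 <= t <= 1], because [lambda(V)] is closed.
    Finally, a boundary point of [lambda(V)] lies in [lambda(V)], hence is some [(f * g)(z)];
    if [|z| < 1], the open mapping theorem for the power series [f * g] (proved below from
    Taylor re-expansion and the minimum modulus principle) would put a neighbourhood of it
    inside [(f * g)(D)], which is contained in [lambda(V)], unless [f * g] is constant near [z],
    in which case the same value is also taken on the unit circle. *)

(** * Series of complex numbers *)

Lemma Cmod_minus_sym (x y : C) : Cmod (x - y) = Cmod (y - x).
Proof. replace (x - y)%C with (- (y - x))%C by ring. apply Cmod_opp. Qed.

Lemma Cmod_triangle_minus (x y : C) : Cmod x <= Cmod y + Cmod (x - y).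
Proof.
  pose proof (Cmod_triangle y (x - y)) as H.
  replace (y + (x - y))%C with x in H by ring. exact H.
Qed.

Lemma Cminus_neq_0 (a b : C) : a <> b -> (a - b)%C <> RtoC 0.
Proof. intros H E. apply H. replace a with (a - b + b)%C by ring. rewrite E. ring. Qed.

Lemma Cmod_le_eps (z : C) : (forall e, 0 < e -> Cmod z <= e) -> z = RtoC 0.
Proof.
  intros H. apply Cmod_eq_0, Rle_antisym; [|apply Cmod_ge_0].
  destruct (Rle_or_lt (Cmod z) 0) as [|Hz]; [assumption|].
  specialize (H (Cmod z / 2) ltac:(lra)). lra.
Qed.

Lemma Rle_of_le_plus_eps x y : (forall e, 0 < e -> x <= y + e) -> x <= y.
Proof.
  intros H. destruct (Rle_or_lt x y); auto.
  specialize (H ((x - y) / 2) ltac:(lra)). lra.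
Qed.

Lemma archi_inv_succ d : 0 < d -> exists n : nat, / (INR n + 1) < d.
Proof.
  intros Hd. destruct (archimed_cor1 d Hd) as [n [Hn Hn0]]. exists n.
  eapply Rlt_trans; [|exact Hn]. apply Rinv_lt_contravar; [|lra].
  apply Rmult_lt_0_compat; [apply lt_0_INR; lia|pose proof (pos_INR n); lra].
Qed.

Lemma is_sum_unique u a b : is_sum u a -> is_sum u b -> a = b.
Proof.
  apply (filterlim_locally_unique (F := eventually)).
Qed.

Lemma is_sum_le_exists (u : nat -> C) (b : nat -> R) :
  (forall n, Cmod (u n) <= b n) -> ex_series b -> exists w, is_sum u w.
Proof.
  intros H Hb.
  destruct (ex_series_le (K := C_AbsRing) (V := C_CompleteNormedModule) u b H Hb)
    as [w Hw].
  now exists w.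
Qed.

Lemma Cmod_is_sum_le (u : nat -> C) w (b : nat -> R) B :
  is_sum u w -> (forall n, Cmod (u n) <= b n) -> is_series b B -> Cmod w <= B.
Proof.
  intros Hw Hu Hb.
  assert (H := filterlim_le (F := eventually)
           (fun N => norm (sum_n (u : nat -> C_NormedModule) N)) (sum_n b)
           (norm (w : C_NormedModule)) B).
  simpl in H. apply H.
  - exists 0%nat. intros N _. eapply Rle_trans; [apply norm_sum_n_m|].
    apply sum_n_m_le. intros k. apply Hu.
  - eapply filterlim_comp; [exact Hw|apply filterlim_norm].
  - exact Hb.
Qed.

Lemma is_sum_plus u v a b :
  is_sum u a -> is_sum v b -> is_sum (fun n => (u n + v n)%C) (a + b)%C.
Proof. apply (is_series_plus (K := C_AbsRing) (V := C_NormedModule)). Qed.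

Lemma is_sum_scal c u a : is_sum u a -> is_sum (fun n => (c * u n)%C) (c * a)%C.
Proof. apply (is_series_scal (K := C_AbsRing) (V := C_NormedModule)). Qed.

Lemma is_sum_minus u v a b :
  is_sum u a -> is_sum v b -> is_sum (fun n => (u n - v n)%C) (a - b)%C.
Proof. apply (is_series_minus (K := C_AbsRing) (V := C_NormedModule)). Qed.

Lemma is_sum_ext u v a : (forall n, u n = v n) -> is_sum u a -> is_sum v a.
Proof. apply (is_series_ext (K := C_AbsRing) (V := C_NormedModule)). Qed.

(** [fsum f N = f 0 + ... + f (N-1)] has [N] terms (while [sum_n f N] has [N+1]),
    and unfolds by [simpl]. *)
Fixpoint fsum (f : nat -> C) (N : nat) : C :=
  match N with O => 0%C | S n => (fsum f n + f n)%C end.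

Fixpoint rfsum (f : nat -> R) (N : nat) : R :=
  match N with O => 0 | S n => rfsum f n + f n end.

Lemma sum_n_fsum (f : nat -> C) N : sum_n (f : nat -> C_NormedModule) N = fsum f (S N).
Proof.
  induction N.
  - rewrite sum_O. simpl. unfold plus. simpl. ring.
  - rewrite sum_Sn, IHN. reflexivity.
Qed.

Lemma sum_n_rfsum (f : nat -> R) N : sum_n f N = rfsum f (S N).
Proof.
  induction N.
  - rewrite sum_O. simpl. ring.
  - rewrite sum_Sn, IHN. reflexivity.
Qed.

Lemma fsum_ext f g N : (forall j, f j = g j) -> fsum f N = fsum g N.
Proof. intros H; induction N; simpl; congruence. Qed.

Lemma fsum_scal a f N : fsum (fun j => (a * f j)%C) N = (a * fsum f N)%C.
Proof. induction N; simpl; [ring|]. rewrite IHN. ring. Qed.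

Lemma fsum_plus f g N : fsum (fun n => (f n + g n)%C) N = (fsum f N + fsum g N)%C.
Proof. induction N; simpl; [ring|]. rewrite IHN. ring. Qed.

Lemma fsum_shift (f : nat -> C) K : fsum f (S K) = (f 0%nat + fsum (fun n => f (S n)) K)%C.
Proof. induction K; simpl in *; [ring|]. rewrite IHK. ring. Qed.

Lemma fsum_const N : fsum (fun _ => 1%C) N = RtoC (INR N).
Proof. induction N; simpl fsum; [reflexivity|]. rewrite IHN, S_INR, RtoC_plus. reflexivity. Qed.

Lemma fsum_RtoC (f : nat -> R) N : fsum (fun n => RtoC (f n)) N = RtoC (rfsum f N).
Proof. induction N; simpl; [reflexivity|]. rewrite IHN, RtoC_plus. reflexivity. Qed.

Lemma Re_fsum f N : Re (fsum f N) = rfsum (fun j => Re (f j)) N.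
Proof. induction N; simpl; [reflexivity|]. rewrite <- IHN. reflexivity. Qed.

Lemma fsum_eq_of_zero (f : nat -> C) K M :
  (forall n, (K <= n)%nat -> f n = RtoC 0) -> (K <= M)%nat -> fsum f M = fsum f K.
Proof. intros H HKM. induction HKM; [reflexivity|]. simpl. rewrite IHHKM, H by lia. ring. Qed.

Lemma Cmod_fsum_le (f : nat -> C) N e :
  (forall j, Cmod (f j) <= e) -> Cmod (fsum f N) <= INR N * e.
Proof.
  intros H. induction N; simpl fsum.
  - rewrite Cmod_0. simpl; lra.
  - eapply Rle_trans; [apply Cmod_triangle|]. rewrite S_INR. specialize (H N). lra.
Qed.

Lemma Cmod_fsum_diff_le (f : nat -> C) (a : nat -> R) K M : (K <= M)%nat ->
  (forall n, Cmod (f n) <= a n) -> Cmod (fsum f M - fsum f K) <= rfsum a M - rfsum a K.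
Proof.
  intros HKM H. induction HKM.
  - replace (fsum f K - fsum f K)%C with (RtoC 0) by ring. rewrite Cmod_0; lra.
  - simpl. replace (fsum f m + f m - fsum f K)%C with ((fsum f m - fsum f K) + f m)%C by ring.
    eapply Rle_trans; [apply Cmod_triangle|]. specialize (H m). lra.
Qed.

Lemma rfsum_ext f g N : (forall n, f n = g n) -> rfsum f N = rfsum g N.
Proof. intros H; induction N; simpl; congruence. Qed.

Lemma rfsum_plus f g N : rfsum (fun n => f n + g n) N = rfsum f N + rfsum g N.
Proof. induction N; simpl; [ring|]. rewrite IHN. ring. Qed.

Lemma rfsum_scal a f N : rfsum (fun n => a * f n) N = a * rfsum f N.
Proof. induction N; simpl; [ring|]. rewrite IHN. ring. Qed.

Lemma rfsum_shift (f : nat -> R) K : rfsum f (S K) = f 0%nat + rfsum (fun n => f (S n)) K.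
Proof. induction K; simpl in *; [ring|]. rewrite IHK. ring. Qed.

Lemma rfsum_nonneg f N : (forall n, 0 <= f n) -> 0 <= rfsum f N.
Proof. intros H; induction N; simpl; [lra|]. specialize (H N). lra. Qed.

Lemma rfsum_ge_term f n M : (forall n, 0 <= f n) -> (n < M)%nat -> f n <= rfsum f M.
Proof.
  intros H HnM. induction HnM; simpl.
  - pose proof (rfsum_nonneg f n H). lra.
  - specialize (H m). lra.
Qed.

Lemma fsum_eq_0 (f : nat -> C) N :
  (forall m, (m < N)%nat -> f m = RtoC 0) -> fsum f N = RtoC 0.
Proof.
  intros H. induction N; simpl; [reflexivity|].
  rewrite IHN by (intros; apply H; lia). rewrite H by lia. ring.
Qed.

Lemma fsum_delta (f : nat -> C) N k c : (k < N)%nat ->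
  (forall m, (m < N)%nat -> f m = if Nat.eqb m k then c else RtoC 0) -> fsum f N = c.
Proof.
  intros Hk H. induction N; [lia|]. simpl.
  destruct (Nat.eq_dec k N) as [<-|Hne].
  - rewrite fsum_eq_0.
    + rewrite H, Nat.eqb_refl by lia. ring.
    + intros m Hm. rewrite H by lia. destruct (Nat.eqb_spec m k); [lia|reflexivity].
  - rewrite IHN by (intros; try apply H; lia).
    rewrite H by lia. destruct (Nat.eqb_spec N k); [lia|ring].
Qed.

Lemma is_sum_0 (u : nat -> C) : (forall n, u n = RtoC 0) -> is_sum u (RtoC 0).
Proof.
  intros H. unfold is_sum, is_series.
  apply (filterlim_ext (fun _ => (RtoC 0 : C_NormedModule))); [|apply filterlim_const].
  intros n. rewrite sum_n_fsum, fsum_eq_0; auto.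
Qed.

Lemma is_sum_single k (x : C) : is_sum (fun n => if Nat.eqb n k then x else RtoC 0) x.
Proof.
  unfold is_sum, is_series.
  apply (filterlim_ext_loc (fun _ => (x : C_NormedModule))); [|apply filterlim_const].
  exists k. intros n Hn. rewrite sum_n_fsum. symmetry. apply (fsum_delta _ _ k); auto. lia.
Qed.

Lemma is_sum_fsum (u : nat -> nat -> C) (U : nat -> C) N :
  (forall j, is_sum (u j) (U j)) -> is_sum (fun m => fsum (fun j => u j m) N) (fsum U N).
Proof.
  intros H. induction N; simpl.
  - apply is_sum_0. reflexivity.
  - apply is_sum_plus; auto.
Qed.

Lemma is_sum_tail (u : nat -> C) w N :
  is_sum u w -> is_sum (fun i => u (N + i)%nat) (w - fsum u N)%C.
Proof.
  intros H. destruct N as [|N].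
  - simpl. replace (w - 0)%C with w by ring. exact H.
  - apply (is_series_incr_n (K := C_AbsRing) (V := C_NormedModule)); [lia|].
    simpl pred. rewrite sum_n_fsum.
    replace (plus _ _) with w by (unfold plus; simpl; ring).
    exact H.
Qed.

Lemma Re_is_sum (u : nat -> C) X : is_sum u X -> is_series (fun n => Re (u n)) (Re X).
Proof.
  intros H. unfold is_sum, is_series in *.
  apply (proj2 (filterlim_locally (F := eventually) _ _)). intros eps.
  destruct (proj1 (filterlim_locally (F := eventually) _ _) H (pos_div_2 eps)) as [N HN].
  exists N. intros n Hn. specialize (HN n Hn). apply C_NormedModule_mixin_compat2 in HN.
  change (Rabs (sum_n (fun n => Re (u n)) n - Re X) < eps).
  assert (Hsum : sum_n (fun n => Re (u n)) n = Re (sum_n (u : nat -> C_NormedModule) n)).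
  { clear. induction n; [rewrite !sum_O; reflexivity|]. rewrite !sum_Sn, IHn. reflexivity. }
  rewrite Hsum. eapply Rle_lt_trans.
  2: { eapply Rlt_le_trans; [exact HN|]. simpl. destruct eps as [e He]; simpl.
       assert (sqrt 2 < 2).
       { rewrite <- (sqrt_square 2) at 2 by lra. apply sqrt_lt_1_alt. lra. }
       nra. }
  change (minus (sum_n (u : nat -> C_NormedModule) n) X)
    with (Cminus (sum_n (u : nat -> C_NormedModule) n) X).
  replace (Re (sum_n (u : nat -> C_NormedModule) n) - Re X)
    with (Re (Cminus (sum_n (u : nat -> C_NormedModule) n) X)) by (unfold Cminus, Re; simpl; ring).
  apply re_le_Cmod.
Qed.

Lemma RtoC_is_sum (f : nat -> R) X : is_series f X -> is_sum (fun n => RtoC (f n)) (RtoC X).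
Proof.
  intros H. unfold is_sum, is_series in *.
  apply (proj2 (filterlim_locally (F := eventually) _ _)). intros eps.
  destruct (proj1 (filterlim_locally (F := eventually) _ _) H eps) as [N HN].
  exists N. intros n Hn. specialize (HN n Hn). apply C_NormedModule_mixin_compat1.
  rewrite sum_n_fsum, fsum_RtoC, <- sum_n_rfsum.
  change (minus (RtoC (sum_n f n)) (RtoC X)) with (Cminus (RtoC (sum_n f n)) (RtoC X)).
  rewrite <- RtoC_minus, Cmod_R. exact HN.
Qed.

Lemma ex_series_nonneg_le (a b : nat -> R) :
  (forall n, 0 <= a n <= b n) -> ex_series b -> ex_series a.
Proof.
  intros H. apply (ex_series_le (K := R_AbsRing) (V := R_CompleteNormedModule)).
  intros n. change (norm (a n)) with (Rabs (a n)). rewrite Rabs_pos_eq; apply H.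
Qed.

Lemma Series_ge_term (a : nat -> R) k :
  (forall n, 0 <= a n) -> ex_series a -> a k <= Series a.
Proof.
  intros Hp He.
  apply Rle_trans with (sum_n a k).
  - destruct k; [rewrite sum_O; lra|]. rewrite sum_Sn. unfold plus; simpl.
    assert (0 <= sum_n a k).
    { clear He. induction k; [rewrite sum_O; auto|].
      rewrite sum_Sn. unfold plus; simpl. specialize (Hp (S k)). lra. }
    lra.
  - apply (is_lim_seq_incr_compare _ _ (Series_correct _ He)).
    intros n; rewrite sum_Sn; unfold plus; simpl; specialize (Hp (S n)); lra.
Qed.

Lemma Series_nonneg (a : nat -> R) : (forall n, 0 <= a n) -> ex_series a -> 0 <= Series a.
Proof. intros. eapply Rle_trans; [apply (H 0%nat)|]. apply Series_ge_term; auto. Qed.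

Lemma Series_tail_lt (a : nat -> R) : (forall n, 0 <= a n) -> ex_series a ->
  forall eps, 0 < eps -> exists N0, forall N, (N0 <= N)%nat -> Series (fun k => a (N + k)%nat) < eps.
Proof.
  intros Hp He eps Heps.
  destruct (proj1 (filterlim_locally (F := eventually) (sum_n a) (Series a))
              (Series_correct _ He) (mkposreal eps Heps)) as [N1 HN1].
  exists (S N1). intros N HN.
  pose proof (Series_incr_n a N ltac:(lia) He) as E.
  specialize (HN1 (pred N) ltac:(lia)). unfold ball in HN1; simpl in HN1. unfold AbsRing_ball in HN1.
  rewrite sum_n_Reals in HN1. unfold abs, minus, plus, opp in HN1; simpl in HN1.
  apply Rabs_lt_between in HN1. lra.
Qed.

(** * Power series *)

Definition abs_conv (c : coef) (r : R) := ex_series (fun k => Cmod (c k) * r ^ k).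

Lemma abs_conv_term_nonneg c r n : 0 <= r -> 0 <= Cmod (c n) * r ^ n.
Proof. intros. apply Rmult_le_pos; [apply Cmod_ge_0|apply pow_le; lra]. Qed.

Lemma abs_conv_Series_nonneg c r : 0 <= r -> abs_conv c r ->
  0 <= Series (fun k => Cmod (c k) * r ^ k).
Proof. intros. apply Series_nonneg; auto. intros; apply abs_conv_term_nonneg; lra. Qed.

Lemma Cmod_pow_term_le (a z : C) r n : Cmod z <= r -> Cmod (a * Cpow z n) <= Cmod a * r ^ n.
Proof.
  intros Hz. rewrite Cmod_mult, Cmod_pow. apply Rmult_le_compat_l; [apply Cmod_ge_0|].
  apply pow_incr. split; [apply Cmod_ge_0|auto].
Qed.

Lemma eval_exists c r z : abs_conv c r -> Cmod z <= r -> exists w, eval c z w.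
Proof. intros H Hz. refine (is_sum_le_exists _ _ _ H). intros n. now apply Cmod_pow_term_le. Qed.

(** The sum of a power series, junk [0] where it diverges. *)
Definition pval (c : coef) (z : C) : C := epsilon (inhabits (RtoC 0)) (fun w => eval c z w).

Lemma pval_eval c z : (exists w, eval c z w) -> eval c z (pval c z).
Proof. apply (epsilon_spec (inhabits (RtoC 0)) (fun w => eval c z w)). Qed.

Lemma eval_pval c z w : eval c z w -> pval c z = w.
Proof. intros H. exact (is_sum_unique _ _ _ (pval_eval c z (ex_intro _ w H)) H). Qed.

Lemma pval_eval_abs_conv c r z : abs_conv c r -> Cmod z <= r -> eval c z (pval c z).
Proof. intros. apply pval_eval. eapply eval_exists; eauto. Qed.

Lemma eval_0 c : eval c (RtoC 0) (c 0%nat).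
Proof.
  apply (is_sum_ext (fun n => if Nat.eqb n 0 then c 0%nat else RtoC 0)); [|apply is_sum_single].
  intros [|n]; simpl; ring.
Qed.

Lemma eval_const (b : coef) z : (forall n, (1 <= n)%nat -> b n = RtoC 0) -> eval b z (b 0%nat).
Proof.
  intros H. apply (is_sum_ext (fun n => if Nat.eqb n 0 then b 0%nat else RtoC 0));
    [|apply is_sum_single].
  intros [|n]; simpl; [ring|]. rewrite H by lia. ring.
Qed.

Lemma Cpow_diff_le (z z' : C) r k : Cmod z <= r -> Cmod z' <= r ->
  Cmod (Cpow z (S k) - Cpow z' (S k)) <= INR (S k) * r ^ k * Cmod (z - z').
Proof.
  intros Hz Hz'. assert (0 <= r) by (eapply Rle_trans; [apply Cmod_ge_0|eauto]).
  induction k.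
  - simpl. replace (z * 1 - z' * 1)%C with (z - z')%C by ring. lra.
  - replace (Cpow z (S (S k)) - Cpow z' (S (S k)))%C with
      (z * (Cpow z (S k) - Cpow z' (S k)) + (z - z') * Cpow z' (S k))%C by (simpl; ring).
    eapply Rle_trans; [apply Cmod_triangle|]. rewrite !Cmod_mult, Cmod_pow.
    assert (Cmod z * Cmod (Cpow z (S k) - Cpow z' (S k))
              <= r * (INR (S k) * r ^ k * Cmod (z - z')))
      by (apply Rmult_le_compat; auto; apply Cmod_ge_0).
    assert (Cmod (z - z') * Cmod z' ^ S k <= Cmod (z - z') * r ^ S k).
    { apply Rmult_le_compat_l; [apply Cmod_ge_0|]. apply pow_incr. split; auto. apply Cmod_ge_0. }
    rewrite S_INR. simpl in *. nra.
Qed.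

Lemma Cpow_diff_le_1 (y y' : C) k : Cmod y <= 1 -> Cmod y' <= 1 ->
  Cmod (Cpow y k - Cpow y' k) <= INR k * Cmod (y - y').
Proof.
  intros Hy Hy'. destruct k.
  - replace (Cpow y 0 - Cpow y' 0)%C with (RtoC 0) by (simpl; ring). rewrite Cmod_0. simpl; lra.
  - eapply Rle_trans; [apply (Cpow_diff_le y y' 1 k); auto|]. rewrite pow1. lra.
Qed.

Lemma Cmod_pow_le_1 y k : Cmod y <= 1 -> Cmod (Cpow y k) <= 1.
Proof.
  intros H. rewrite Cmod_pow, <- (pow1 k). apply pow_incr. split; [apply Cmod_ge_0|auto].
Qed.

(** The mean value inequality for [x^(k+1)] on [[r, rho]]. *)
Lemma pow_mean_value_le r rho k : 0 <= r < rho ->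
  INR (S k) * r ^ k * (rho - r) + r ^ (S k) <= rho ^ (S k).
Proof.
  intros Hr. induction k.
  - simpl. lra.
  - rewrite S_INR.
    assert (r ^ S k <= rho ^ S k) by (apply pow_incr; lra).
    assert (0 <= r ^ S k) by (apply pow_le; lra).
    replace ((INR (S k) + 1) * r ^ S k * (rho - r) + r ^ S (S k)) with
      (r * (INR (S k) * r ^ k * (rho - r) + r ^ S k) + r ^ S k * (rho - r)) by (simpl; ring).
    replace (rho ^ S (S k)) with (rho * rho ^ S k) by (simpl; ring).
    assert (r * (INR (S k) * r ^ k * (rho - r) + r ^ S k) <= r * rho ^ S k)
      by (apply Rmult_le_compat_l; lra).
    nra.
Qed.

Lemma pval_lipschitz c rho r z z' : abs_conv c rho -> 0 <= r < rho ->
  Cmod z <= r -> Cmod z' <= r ->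
  Cmod (pval c z - pval c z')
    <= Series (fun k => Cmod (c k) * rho ^ k) / (rho - r) * Cmod (z - z').
Proof.
  intros Hc Hr Hz Hz'.
  pose proof (is_sum_minus _ _ _ _ (pval_eval_abs_conv c rho z Hc ltac:(lra))
                (pval_eval_abs_conv c rho z' Hc ltac:(lra))) as D.
  replace (Series (fun k => Cmod (c k) * rho ^ k) / (rho - r) * Cmod (z - z')) with
    (Series (fun k => Cmod (c k) * rho ^ k) * (Cmod (z - z') / (rho - r))) by (field; lra).
  eapply Cmod_is_sum_le; [exact D| |].
  2: { apply (is_series_scal_r (Cmod (z - z') / (rho - r))). apply Series_correct, Hc. }
  intros n. simpl.
  replace (c n * Cpow z n - c n * Cpow z' n)%C with (c n * (Cpow z n - Cpow z' n))%C by ring.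
  rewrite Cmod_mult.
  replace (Cmod (c n) * rho ^ n * (Cmod (z - z') / (rho - r)))
    with (Cmod (c n) * (rho ^ n * Cmod (z - z') / (rho - r))) by (field; lra).
  apply Rmult_le_compat_l; [apply Cmod_ge_0|].
  pose proof (Cmod_ge_0 (z - z')).
  destruct n.
  - replace (Cpow z 0 - Cpow z' 0)%C with (RtoC 0) by (simpl; ring). rewrite Cmod_0. simpl.
    apply Rmult_le_pos; [lra|]. apply Rlt_le, Rinv_0_lt_compat; lra.
  - eapply Rle_trans; [apply (Cpow_diff_le z z' r n Hz Hz')|].
    pose proof (pow_mean_value_le r rho n ltac:(lra)).
    assert (0 <= r ^ S n) by (apply pow_le; lra).
    apply (Rmult_le_reg_r (rho - r)); [lra|].
    replace (rho ^ S n * Cmod (z - z') / (rho - r) * (rho - r)) with (rho ^ S n * Cmod (z - z'))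
      by (field; lra).
    nra.
Qed.

Lemma in_A_bounded f r : in_A f -> 0 <= r < 1 -> exists M, forall k, Cmod (f k) * r ^ k <= M.
Proof.
  intros Hf Hr. exists (Series (fun k => Cmod (f k) * r ^ k)). intros k.
  apply (Series_ge_term (fun k => Cmod (f k) * r ^ k));
    [intros; apply abs_conv_term_nonneg; lra|apply Hf; auto].
Qed.

Lemma hadamard_abs_conv f g : in_A f -> in_Abar g ->
  exists rho, 1 < rho /\ abs_conv (hadamard f g) rho.
Proof.
  intros Hf [R0 [HR0 Hg]].
  set (rho := (1 + R0) / 2). set (r := rho / R0).
  assert (Hr : 0 <= r < 1).
  { unfold r, rho. split; [apply Rle_mult_inv_pos; lra|].
    apply (Rmult_lt_reg_r R0); [lra|]. field_simplify; lra. }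
  destruct (in_A_bounded f r Hf Hr) as [M HM].
  exists rho. split; [unfold rho; lra|].
  apply (ex_series_nonneg_le _ (fun k => M * (Cmod (g k) * R0 ^ k))).
  - intros k. split; [apply abs_conv_term_nonneg; unfold rho; lra|].
    unfold hadamard. rewrite Cmod_mult.
    replace rho with (r * R0) by (unfold r; field; lra). rewrite Rpow_mult_distr.
    replace (Cmod (f k) * Cmod (g k) * (r ^ k * R0 ^ k))
      with ((Cmod (f k) * r ^ k) * (Cmod (g k) * R0 ^ k)) by ring.
    apply Rmult_le_compat_r; [apply abs_conv_term_nonneg; lra|apply HM].
  - exact (ex_series_scal_l (K := R_AbsRing) (V := R_NormedModule) M _ Hg).
Qed.

(** * Roots of unity and Cauchy's estimate *)

Definition cis (a : R) : C := (cos a, sin a).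

Lemma cis_mult a b : (cis a * cis b)%C = cis (a + b).
Proof. unfold cis, Cmult; simpl. rewrite cos_plus, sin_plus. f_equal; ring. Qed.

Lemma cis_pow a n : Cpow (cis a) n = cis (INR n * a).
Proof.
  induction n.
  - simpl. unfold cis. rewrite Rmult_0_l, cos_0, sin_0. reflexivity.
  - rewrite Cpow_S, IHn, cis_mult, S_INR. f_equal. ring.
Qed.

Lemma Cmod_cis a : Cmod (cis a) = 1.
Proof.
  unfold Cmod, cis; simpl. pose proof (sin2_cos2 a) as H. unfold Rsqr in H.
  replace (cos a * (cos a * 1) + sin a * (sin a * 1)) with 1 by lra. apply sqrt_1.
Qed.

Lemma cis_neq_1 t : 0 < t < 2 * PI -> cis t <> 1%C.
Proof.
  intros Ht E. unfold cis in E. injection E as Ec Es.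
  destruct (sin_eq_0_0 t Es) as [k Hk]. subst t.
  assert (0 < IZR k < 2) as [H1 H2] by (pose proof PI_RGT_0; split; nra).
  apply lt_IZR in H1. apply lt_IZR in H2.
  assert (k = 1%Z) by lia. subst k. simpl in Ec. rewrite Rmult_1_l, cos_PI in Ec. lra.
Qed.

Definition omega (N : nat) : C := cis (2 * PI / INR N).

Lemma Cmod_omega_pow N j : Cmod (Cpow (omega N) j) = 1.
Proof. rewrite Cmod_pow. unfold omega. rewrite Cmod_cis. apply pow1. Qed.

Lemma omega_pow_N N : (1 <= N)%nat -> Cpow (omega N) N = 1%C.
Proof.
  intros H. unfold omega. rewrite cis_pow.
  replace (INR N * (2 * PI / INR N)) with (0 + 2 * INR 1 * PI)
    by (simpl; field; apply not_0_INR; lia).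
  unfold cis. rewrite cos_period, sin_period, cos_0, sin_0. reflexivity.
Qed.

Lemma omega_pow_neq_1 N s : (0 < s < N)%nat -> Cpow (omega N) s <> 1%C.
Proof.
  intros H. unfold omega. rewrite cis_pow. apply cis_neq_1.
  assert (0 < INR s) by (apply lt_0_INR; lia).
  assert (INR s < INR N) by (apply lt_INR; lia).
  pose proof PI_RGT_0. split.
  - apply Rmult_lt_0_compat; [auto|]. apply Rdiv_lt_0_compat; lra.
  - replace (INR s * (2 * PI / INR N)) with (2 * PI * (INR s / INR N)) by (field; lra).
    rewrite <- (Rmult_1_r (2 * PI)) at 2. apply Rmult_lt_compat_l; [lra|].
    apply (Rmult_lt_reg_r (INR N)); [lra|]. field_simplify; lra.
Qed.

Lemma fsum_geom (z : C) N : (fsum (fun j => Cpow z j) N * (z - 1) = Cpow z N - 1)%C.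
Proof. induction N; simpl; [ring|]. rewrite Cmult_plus_distr_r, IHN. ring. Qed.

Lemma fsum_omega_pow N q : (1 <= N)%nat ->
  fsum (fun j => Cpow (Cpow (omega N) q) j) N
  = if Nat.eqb (q mod N) 0 then RtoC (INR N) else 0%C.
Proof.
  intros HN. pose proof (Nat.div_mod_eq q N) as Hd.
  set (s := (q mod N)%nat) in *.
  assert (Hs : (s < N)%nat) by (apply Nat.mod_upper_bound; lia).
  assert (Hz : Cpow (omega N) q = Cpow (omega N) s).
  { rewrite Hd, Cpow_add_r, Cpow_mult_r, omega_pow_N, Cpow_1_l by auto. ring. }
  rewrite Hz. destruct (Nat.eqb_spec s 0) as [E|E].
  - rewrite E, (fsum_ext _ (fun _ => 1%C)); [apply fsum_const|].
    intros j. apply Cpow_1_l.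
  - set (z := Cpow (omega N) s).
    assert (Hz1 : (z - 1)%C <> RtoC 0).
    { intros E'. apply (omega_pow_neq_1 N s); [lia|].
      fold z. replace z with (z - 1 + 1)%C by ring. rewrite E'. ring. }
    assert (HzN : Cpow z N = 1%C).
    { unfold z. rewrite <- Cpow_mult_r, Nat.mul_comm, Cpow_mult_r, omega_pow_N by auto.
      apply Cpow_1_l. }
    pose proof (fsum_geom z N) as G. rewrite HzN in G.
    replace (fsum (fun j => Cpow z j) N)
      with (fsum (fun j => Cpow z j) N * (z - 1) / (z - 1))%C by (field; auto).
    rewrite G. field. auto.
Qed.

Lemma add_mul_mod_succ_eqb M m k : (m <= M)%nat -> (k <= M)%nat ->
  Nat.eqb ((m + M * k) mod (S M)) 0 = Nat.eqb m k.
Proof.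
  intros Hm Hk. destruct (Nat.eqb_spec m k) as [<-|E].
  - replace (m + M * m)%nat with (m * S M)%nat by lia. rewrite Nat.Div0.mod_mul. reflexivity.
  - destruct (Nat.eqb_spec ((m + M * k) mod S M) 0) as [E2|E2]; [exfalso|reflexivity].
    pose proof (Nat.div_mod_eq (m + M * k) (S M)) as Hd. rewrite E2 in Hd.
    set (t := ((m + M * k) / S M)%nat) in *.
    assert (t + 1 <= k \/ t = k \/ k + 1 <= t)%nat as [Ht|[Ht|Ht]] by lia.
    + assert (S M * (t + 1) <= S M * k)%nat by (apply Nat.mul_le_mono_l; auto). nia.
    + subst t. nia.
    + assert (S M * (k + 1) <= S M * t)%nat by (apply Nat.mul_le_mono_l; auto). nia.
Qed.

(** Averaging [d] over the circle of radius [r] against [omega^(M k j)] (that is,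
    against [omega^(-k j)]) keeps exactly the terms of index [m = k (mod M+1)]. *)
Lemma is_sum_roots_average (d : coef) r M k : 0 <= r -> abs_conv d r ->
  is_sum (fun m => (d m * RtoC (r ^ m) *
             (if Nat.eqb ((m + M * k) mod S M) 0 then RtoC (INR (S M)) else RtoC 0))%C)
    (fsum (fun j => Cpow (Cpow (omega (S M)) (M * k)) j
                    * pval d (RtoC r * Cpow (omega (S M)) j))%C (S M)).
Proof.
  intros Hr Hc. set (w := omega (S M)).
  eapply is_sum_ext.
  2: { apply (is_sum_fsum (fun j m => (Cpow (Cpow w (M * k)) j
                                       * (d m * Cpow (RtoC r * Cpow w j) m))%C)).
       intros j. apply is_sum_scal. apply pval_eval_abs_conv with r; auto.
       unfold w. rewrite Cmod_mult, Cmod_omega_pow, Cmod_R, Rabs_pos_eq; lra. }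
  intros m. cbv beta.
  rewrite <- (fsum_omega_pow (S M) (m + M * k)), <- fsum_scal by lia.
  apply fsum_ext. intros j.
  rewrite Cpow_mult_l, RtoC_pow, <- !Cpow_mult_r.
  replace ((m + M * k) * j)%nat with (j * m + M * k * j)%nat by ring.
  rewrite Cpow_add_r. fold w. ring.
Qed.

Lemma cauchy_estimate (d : coef) r eps k : 0 < r -> abs_conv d r ->
  (forall z, Cmod z = r -> Cmod (pval d z) <= eps) -> Cmod (d k) * r ^ k <= eps.
Proof.
  intros Hr Hc Hb. apply Rle_of_le_plus_eps. intros e He.
  destruct (Series_tail_lt _ (fun n => abs_conv_term_nonneg d r n ltac:(lra)) Hc e He)
    as [N0 HN0].
  set (M := Nat.max N0 k). set (N := S M).
  pose proof (is_sum_roots_average d r M k ltac:(lra) Hc) as HU.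
  fold N in HU.
  set (U := fun m => _) in HU. set (W := fsum _ N) in HU.
  assert (HW : Cmod W <= INR N * eps).
  { apply Cmod_fsum_le. intros j. rewrite Cmod_mult, Cmod_pow, Cmod_omega_pow, pow1, Rmult_1_l.
    apply Hb. rewrite Cmod_mult, Cmod_omega_pow, Cmod_R, Rabs_pos_eq; lra. }
  assert (Hhead : fsum U N = (RtoC (INR N) * (d k * RtoC (r ^ k)))%C).
  { apply (fsum_delta _ _ k); [unfold N, M; lia|].
    intros m Hm. unfold U. unfold N at 1. rewrite add_mul_mod_succ_eqb by (unfold N, M in *; lia).
    destruct (Nat.eqb_spec m k); [subst; ring|ring]. }
  assert (Htail : Cmod (W - fsum U N)%C
                  <= INR N * Series (fun i => Cmod (d (N + i)%nat) * r ^ (N + i)%nat)).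
  { eapply Cmod_is_sum_le; [exact (is_sum_tail U W N HU)| |].
    2: { rewrite Rmult_comm. apply is_series_scal_r, Series_correct.
         exact (proj1 (ex_series_incr_n (K := R_AbsRing) (V := R_NormedModule) _ N) Hc). }
    intros i. unfold U. rewrite !Cmod_mult, Cmod_R, Rabs_pos_eq by (apply pow_le; lra).
    pose proof (pos_INR N). pose proof (abs_conv_term_nonneg d r (N + i) ltac:(lra)).
    destruct (Nat.eqb _ 0); [rewrite Cmod_R, Rabs_pos_eq; lra|rewrite Cmod_0; nra]. }
  specialize (HN0 N ltac:(unfold N, M; lia)).
  assert (HNpos : 0 < INR N) by (apply lt_0_INR; unfold N; lia).
  assert (Hmod : Cmod (fsum U N) = INR N * (Cmod (d k) * r ^ k)).
  { rewrite Hhead, !Cmod_mult, !Cmod_R, !Rabs_pos_eq; [reflexivity|apply pow_le; lra|apply pos_INR]. }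
  pose proof (Cmod_triangle_minus (fsum U N) W) as Htri.
  rewrite Cmod_minus_sym, Hmod in Htri.
  apply (Rmult_le_reg_l (INR N)); [exact HNpos|]. nra.
Qed.

(** With [x_j = q omega^(k j)] and [N = 2k+1], both [sum x_j] and [sum x_j^2] vanish;
    if no [Re x_j] were negative, the first sum would force all [Re x_j = 0],
    and then [Re (x_j^2) = - |q|^2] contradicts the second. *)
Lemma exists_unit_Re_neg (q : C) k : q <> RtoC 0 -> (1 <= k)%nat ->
  exists u, Cmod u = 1 /\ Re (q * Cpow u k) < 0.
Proof.
  intros Hq Hk. set (N := S (2 * k)). set (w := omega N).
  set (x := fun j => (q * Cpow (Cpow w k) j)%C).
  assert (Hsum : fsum x N = RtoC 0).
  { unfold x, w. rewrite fsum_scal, fsum_omega_pow by (unfold N; lia).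
    rewrite Nat.mod_small by (unfold N; lia). destruct (Nat.eqb_spec k 0); [lia|ring]. }
  assert (Hsum2 : fsum (fun j => x j * x j)%C N = RtoC 0).
  { rewrite (fsum_ext _ (fun j => (q * q) * Cpow (Cpow w (2 * k)) j)%C).
    - rewrite fsum_scal. unfold w. rewrite fsum_omega_pow by (unfold N; lia).
      rewrite Nat.mod_small by (unfold N; lia). destruct (Nat.eqb_spec (2 * k) 0); [lia|ring].
    - intros j. unfold x. rewrite <- !Cpow_mult_r.
      replace (2 * k * j)%nat with (k * j + k * j)%nat by lia. rewrite Cpow_add_r. ring. }
  assert (Hsq : forall j, Re (x j) ^ 2 = (Cmod q ^ 2 + Re (x j * x j)%C) / 2).
  { intros j. replace (Cmod q) with (Cmod (x j))
      by (unfold x, w; rewrite Cmod_mult, <- Cpow_mult_r, Cmod_omega_pow; ring).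
    rewrite Cmod2_alt. destruct (x j) as [a b]. unfold Re, Im, Cmult; simpl. field. }
  apply NNPP. intros Hno.
  assert (Hnn : forall j, 0 <= Re (x j)).
  { intros j. apply Rnot_lt_le. intros Hlt. apply Hno. exists (Cpow w j).
    split; [apply Cmod_omega_pow|].
    unfold x in Hlt. rewrite <- !Cpow_mult_r in *. rewrite Nat.mul_comm. exact Hlt. }
  assert (Hre0 : forall j, (j < N)%nat -> Re (x j) = 0).
  { intros j Hj. apply Rle_antisym; [|auto].
    replace 0 with (rfsum (fun j => Re (x j)) N) by (rewrite <- Re_fsum, Hsum; reflexivity).
    apply (rfsum_ge_term (fun j => Re (x j))); auto. }
  assert (Hsq0 : rfsum (fun j => Re (x j) ^ 2) N = 0).
  { assert (Hle : forall M, (M <= N)%nat -> rfsum (fun j => Re (x j) ^ 2) M = 0).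
    { induction M; intros HM; cbn [rfsum]; [reflexivity|]. rewrite IHM, Hre0 by lia. ring. }
    apply Hle; lia. }
  rewrite (rfsum_ext _ (fun j => / 2 * Cmod q ^ 2 + / 2 * Re (x j * x j)%C)) in Hsq0
    by (intros; rewrite Hsq; unfold Rdiv; ring).
  rewrite rfsum_plus, !rfsum_scal, <- Re_fsum, Hsum2 in Hsq0.
  assert (Hconst : forall M, rfsum (fun _ => Cmod q ^ 2) M = INR M * Cmod q ^ 2).
  { induction M; cbn [rfsum]; [simpl; ring|]. rewrite IHM, S_INR. ring. }
  rewrite Hconst in Hsq0. simpl Re in Hsq0.
  assert (0 < Cmod q) by (apply Cmod_gt_0; auto).
  assert (0 < INR N) by (apply lt_0_INR; unfold N; lia).
  assert (0 < INR N * Cmod q ^ 2) by (apply Rmult_lt_0_compat; auto; apply pow_lt; auto).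
  lra.
Qed.

(** * Re-expansion of a power series about another centre *)

Section TriangularFubini.

Variables (u : nat -> nat -> C) (a : nat -> nat -> R).
Hypothesis u_le_a : forall m n, Cmod (u m n) <= a m n.
Hypothesis u_upper : forall m n, (m < n)%nat -> u m n = RtoC 0.
Hypothesis rows_summable : ex_series (fun m => rfsum (a m) (S m)).

Let a_nonneg m n : 0 <= a m n.
Proof. eapply Rle_trans; [apply Cmod_ge_0|apply u_le_a]. Qed.

(** Summing by columns gives the sum of the row sums: the first [N+1] columns
    contain rows [0..N] entirely, and the rest is dominated by a tail of [rows_summable]. *)
Lemma triangular_fubini total (col : nat -> C) :
  (forall n, is_sum (fun m => u m n) (col n)) ->
  is_sum (fun m => fsum (u m) (S m)) total -> is_sum col total.
Proof.
  intros Hcol Htot. unfold is_sum, is_series.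
  apply (proj2 (filterlim_locally (F := eventually) (sum_n (col : nat -> C_NormedModule)) total)).
  intros eps.
  destruct (Series_tail_lt _ (fun m => rfsum_nonneg _ _ (a_nonneg m)) rows_summable (eps / 2)
              ltac:(destruct eps; simpl; lra)) as [N0 HN0].
  exists N0. intros N HN. apply C_NormedModule_mixin_compat1.
  rewrite sum_n_fsum.
  pose proof (is_sum_minus _ _ _ _ Htot (is_sum_fsum (fun n m => u m n) col (S N) Hcol)) as D.
  cbv beta in D. set (Dm := fun m => _) in D.
  assert (HD0 : forall m, (m < S N)%nat -> Dm m = RtoC 0).
  { intros m Hm. unfold Dm. change (fun j => u m j) with (u m).
    rewrite (fsum_eq_of_zero (u m) (S m) (S N)); [ring| |lia].
    intros n Hn. apply u_upper. lia. }
  assert (Hb : Cmod (total - fsum col (S N))%C <= Series (fun i => rfsum (a (S N + i)%nat) (S (S N + i)))).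
  { apply (Cmod_is_sum_le (fun i => Dm (S N + i)%nat) _ (fun i => rfsum (a (S N + i)%nat) (S (S N + i)))).
    - pose proof (is_sum_tail Dm _ (S N) D) as T.
      rewrite (fsum_eq_0 Dm) in T by exact HD0. replace (total - fsum col (S N) - 0)%C
        with (total - fsum col (S N))%C in T by ring. exact T.
    - intros i. unfold Dm. change (fun j => u (S N + i)%nat j) with (u (S N + i)%nat).
      eapply Rle_trans.
      { apply (Cmod_fsum_diff_le (u (S N + i)%nat) (a (S N + i)%nat) (S N) (S (S N + i)));
          [lia|apply u_le_a]. }
      pose proof (rfsum_nonneg (a (S N + i)%nat) (S N) (a_nonneg _)). lra.
    - apply Series_correct.
      exact (proj1 (ex_series_incr_n (K := R_AbsRing) (V := R_NormedModule) _ (S N)) rows_summable). }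
  specialize (HN0 (S N) ltac:(lia)).
  change (minus (fsum col (S N)) total) with (Cminus (fsum col (S N)) total).
  rewrite Cmod_minus_sym. destruct eps; simpl in *. lra.
Qed.

End TriangularFubini.

(** [shift_coef a m n] is the coefficient of [z^n] in [(a + z)^m];
    [shift_coefR] is its real analogue, a majorant of its modulus. *)
Fixpoint shift_coef (a : C) (m : nat) : nat -> C :=
  match m with
  | O => fun n => match n with O => RtoC 1 | S _ => RtoC 0 end
  | S m' => fun n => (a * shift_coef a m' n
                      + match n with O => RtoC 0 | S n' => shift_coef a m' n' end)%C
  end.

Fixpoint shift_coefR (s : R) (m : nat) : nat -> R :=
  match m with
  | O => fun n => match n with O => 1 | S _ => 0 end
  | S m' => fun n => s * shift_coefR s m' n
                     + match n with O => 0 | S n' => shift_coefR s m' n' end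
  end.

Lemma shift_coef_gt a m n : (m < n)%nat -> shift_coef a m n = RtoC 0.
Proof.
  revert n; induction m; intros n H; simpl; destruct n; try lia; auto.
  rewrite !IHm by lia. ring.
Qed.

Lemma shift_coefR_gt s m n : (m < n)%nat -> shift_coefR s m n = 0.
Proof.
  revert n; induction m; intros n H; simpl; destruct n; try lia; auto.
  rewrite !IHm by lia. ring.
Qed.

Lemma shift_coefR_nonneg s m n : 0 <= s -> 0 <= shift_coefR s m n.
Proof.
  intros Hs. revert n; induction m; intros n; simpl; destruct n; try lra.
  - specialize (IHm 0%nat). nra.
  - pose proof (IHm (S n)). pose proof (IHm n). nra.
Qed.

Lemma Cmod_shift_coef_le a m n : Cmod (shift_coef a m n) <= shift_coefR (Cmod a) m n.
Proof.
  revert n; induction m; intros n; simpl.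
  - destruct n; [rewrite Cmod_1|rewrite Cmod_0]; lra.
  - eapply Rle_trans; [apply Cmod_triangle|]. rewrite Cmod_mult.
    assert (Cmod a * Cmod (shift_coef a m n) <= Cmod a * shift_coefR (Cmod a) m n)
      by (apply Rmult_le_compat_l; [apply Cmod_ge_0|auto]).
    destruct n; [rewrite Cmod_0; lra|]. specialize (IHm n). lra.
Qed.

Lemma fsum_shift_coef a z m :
  fsum (fun n => (shift_coef a m n * Cpow z n)%C) (S m) = Cpow (a + z)%C m.
Proof.
  induction m; [simpl; ring|]. cbn [shift_coef].
  rewrite (fsum_ext _ (fun n => (a * (shift_coef a m n * Cpow z n))
             + (match n with O => RtoC 0 | S n' => shift_coef a m n' end * Cpow z n))%C)
    by (intros; ring).
  rewrite fsum_plus, fsum_scal.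
  assert (Hlow : fsum (fun n => match n with O => RtoC 0 | S n' => shift_coef a m n' end
                                * Cpow z n)%C (S (S m)) = (z * Cpow (a + z) m)%C).
  { rewrite fsum_shift, (fsum_ext _ (fun n => z * (shift_coef a m n * Cpow z n))%C)
      by (intros; simpl; ring).
    rewrite fsum_scal, IHm. ring. }
  rewrite Hlow. cbn [fsum]. rewrite (shift_coef_gt a m (S m)) by lia.
  change (fsum (fun n => shift_coef a m n * Cpow z n) m + shift_coef a m m * Cpow z m)%C
    with (fsum (fun n => shift_coef a m n * Cpow z n) (S m))%C.
  rewrite IHm. simpl. ring.
Qed.

Lemma rfsum_shift_coefR s r m :
  rfsum (fun n => shift_coefR s m n * r ^ n) (S m) = (s + r) ^ m.
Proof.
  induction m; [simpl; ring|]. cbn [shift_coefR].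
  rewrite (rfsum_ext _ (fun n => (s * (shift_coefR s m n * r ^ n))
             + (match n with O => 0 | S n' => shift_coefR s m n' end * r ^ n)))
    by (intros; ring).
  rewrite rfsum_plus, rfsum_scal.
  assert (Hlow : rfsum (fun n => match n with O => 0 | S n' => shift_coefR s m n' end
                                 * r ^ n) (S (S m)) = r * (s + r) ^ m).
  { rewrite rfsum_shift, (rfsum_ext _ (fun n => r * (shift_coefR s m n * r ^ n)))
      by (intros; simpl; ring).
    rewrite rfsum_scal, IHm. ring. }
  rewrite Hlow. cbn [rfsum]. rewrite (shift_coefR_gt s m (S m)) by lia.
  change (rfsum (fun n => shift_coefR s m n * r ^ n) m + shift_coefR s m m * r ^ m)
    with (rfsum (fun n => shift_coefR s m n * r ^ n) (S m)).
  rewrite IHm. simpl. ring.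
Qed.

Definition csum (u : nat -> C) : C := epsilon (inhabits (RtoC 0)) (fun w => is_sum u w).

Lemma csum_is_sum u : (exists w, is_sum u w) -> is_sum u (csum u).
Proof. apply (epsilon_spec (inhabits (RtoC 0)) (fun w => is_sum u w)). Qed.

(** The Taylor coefficients of [c] at [p]: [taylor c p n = sum_m c_m (m choose n) p^(m-n)]. *)
Definition taylor (c : coef) (p : C) : coef :=
  fun n => csum (fun m => (c m * shift_coef p m n)%C).

Section Taylor.

Variables (c : coef) (rho : R) (p : C).
Hypothesis c_conv : abs_conv c rho.
Hypothesis p_inside : Cmod p < rho.

Let majorant m n := Cmod (c m) * shift_coefR (Cmod p) m n * (rho - Cmod p) ^ n.

Let majorant_nonneg m n : 0 <= majorant m n.
Proof.
  apply Rmult_le_pos; [apply Rmult_le_pos|apply pow_le; lra];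
    [apply Cmod_ge_0|apply shift_coefR_nonneg, Cmod_ge_0].
Qed.

Let majorant_upper m n : (m < n)%nat -> majorant m n = 0.
Proof. intros. unfold majorant. rewrite shift_coefR_gt by auto. ring. Qed.

Let majorant_row m : rfsum (majorant m) (S m) = Cmod (c m) * rho ^ m.
Proof.
  unfold majorant.
  rewrite (rfsum_ext _ (fun n => Cmod (c m) * (shift_coefR (Cmod p) m n * (rho - Cmod p) ^ n)))
    by (intros; ring).
  rewrite rfsum_scal, rfsum_shift_coefR. f_equal. f_equal. ring.
Qed.

Let majorant_rows : ex_series (fun m => rfsum (majorant m) (S m)).
Proof.
  eapply (ex_series_ext (K := R_AbsRing) (V := R_NormedModule)); [|exact c_conv].
  intros m. symmetry. apply majorant_row.
Qed.

Let majorant_le_row m n : majorant m n <= Cmod (c m) * rho ^ m.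
Proof.
  rewrite <- majorant_row. destruct (le_lt_dec n m).
  - apply rfsum_ge_term; auto. lia.
  - rewrite majorant_upper by auto. apply rfsum_nonneg; auto.
Qed.

Let Cmod_term_le m n (z : C) : Cmod z <= rho - Cmod p ->
  Cmod (c m * shift_coef p m n * Cpow z n) <= majorant m n.
Proof.
  intros Hz. unfold majorant. rewrite !Cmod_mult, Cmod_pow.
  pose proof (Cmod_shift_coef_le p m n). pose proof (Cmod_ge_0 (c m)).
  pose proof (Cmod_ge_0 (shift_coef p m n)). pose proof (pow_le _ n (Cmod_ge_0 z)).
  apply Rmult_le_compat; [apply Rmult_le_pos; auto|auto| |].
  - apply Rmult_le_compat_l; auto.
  - apply pow_incr. split; [apply Cmod_ge_0|auto].
Qed.

Lemma is_sum_taylor n : is_sum (fun m => (c m * shift_coef p m n)%C) (taylor c p n).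
Proof.
  apply csum_is_sum.
  set (Rr := rho - Cmod p). assert (HRn : 0 < Rr ^ n) by (apply pow_lt; unfold Rr; lra).
  apply (is_sum_le_exists _ (fun m => Cmod (c m) * rho ^ m * / Rr ^ n)).
  - intros m. apply (Rmult_le_reg_r (Rr ^ n)); [auto|].
    replace (Cmod (c m) * rho ^ m * / Rr ^ n * Rr ^ n) with (Cmod (c m) * rho ^ m) by (field; lra).
    eapply Rle_trans; [|apply (majorant_le_row m n)].
    replace (Rr ^ n) with (Cmod (Cpow (RtoC Rr) n)) by
      (rewrite Cmod_pow, Cmod_R, Rabs_pos_eq; unfold Rr; [reflexivity|lra]).
    rewrite <- Cmod_mult. apply Cmod_term_le.
    rewrite Cmod_R, Rabs_pos_eq; unfold Rr; lra.
  - apply ex_series_scal_r, c_conv.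
Qed.

Lemma taylor_eval z : Cmod z <= rho - Cmod p -> eval (taylor c p) z (pval c (p + z)%C).
Proof.
  intros Hz.
  apply (triangular_fubini (fun m n => c m * shift_coef p m n * Cpow z n)%C majorant).
  - intros m n. now apply Cmod_term_le.
  - intros m n H. rewrite shift_coef_gt by auto. ring.
  - exact majorant_rows.
  - intros n. replace (taylor c p n * Cpow z n)%C with (Cpow z n * taylor c p n)%C by ring.
    eapply is_sum_ext; [|apply (is_sum_scal (Cpow z n) _ _ (is_sum_taylor n))].
    intros m; simpl; ring.
  - eapply is_sum_ext; [|apply (pval_eval_abs_conv c rho (p + z)%C c_conv)].
    + intros m. cbv beta.
      rewrite (fsum_ext _ (fun n => c m * (shift_coef p m n * Cpow z n))%C) by (intros; ring).
      rewrite fsum_scal, fsum_shift_coef. reflexivity.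
    + eapply Rle_trans; [apply Cmod_triangle|]. lra.
Qed.

Lemma taylor_abs_conv : abs_conv (taylor c p) (rho - Cmod p).
Proof.
  set (Rr := rho - Cmod p). assert (HRn : forall n, 0 < Rr ^ n) by (intros; apply pow_lt; unfold Rr; lra).
  assert (Hcol : forall n, ex_series (fun m => majorant m n)).
  { intros n. apply (ex_series_nonneg_le _ (fun m => Cmod (c m) * rho ^ m)); auto. }
  set (beta := fun n => Series (fun m => majorant m n)).
  assert (Hbeta : ex_series beta).
  { exists (Re (RtoC (Series (fun m => rfsum (majorant m) (S m))))).
    apply (Re_is_sum (fun n => RtoC (beta n))).
    apply (triangular_fubini (fun m n => RtoC (majorant m n)) majorant).
    - intros m n. rewrite Cmod_R, Rabs_pos_eq; auto. lra.
    - intros m n H. rewrite majorant_upper by auto. reflexivity.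
    - exact majorant_rows.
    - intros n. apply RtoC_is_sum, Series_correct, Hcol.
    - eapply is_sum_ext; [|apply RtoC_is_sum, Series_correct, majorant_rows].
      intros m. cbv beta. rewrite fsum_RtoC. reflexivity. }
  apply (ex_series_nonneg_le _ beta); auto.
  intros n. split; [apply abs_conv_term_nonneg; unfold Rr; lra|].
  replace (Cmod (taylor c p n) * Rr ^ n) with (Cmod (RtoC (Rr ^ n) * taylor c p n)%C)
    by (rewrite Cmod_mult, Cmod_R, Rabs_pos_eq; [ring|specialize (HRn n); lra]).
  eapply Cmod_is_sum_le; [exact (is_sum_scal _ _ _ (is_sum_taylor n))| |apply Series_correct, Hcol].
  intros m. cbv beta.
  replace (RtoC (Rr ^ n) * (c m * shift_coef p m n))%C
    with (c m * shift_coef p m n * Cpow (RtoC Rr) n)%C by (rewrite RtoC_pow; ring).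
  apply Cmod_term_le. rewrite Cmod_R, Rabs_pos_eq; unfold Rr; lra.
Qed.

Lemma taylor_0 : taylor c p 0%nat = pval c p.
Proof.
  pose proof (taylor_eval (RtoC 0) ltac:(rewrite Cmod_0; lra)) as E.
  replace (p + RtoC 0)%C with p in E by ring.
  exact (is_sum_unique _ _ _ (eval_0 _) E).
Qed.

Lemma pval_taylor_const z : (forall n, (1 <= n)%nat -> taylor c p n = RtoC 0) ->
  Cmod z <= rho - Cmod p -> pval c (p + z)%C = pval c p.
Proof.
  intros H Hz. rewrite <- taylor_0.
  exact (is_sum_unique _ _ _ (taylor_eval z Hz) (eval_const _ z H)).
Qed.

End Taylor.

(** * Local behaviour of a non-constant power series *)

Lemma at_right_0_le c : 0 < c -> at_right 0 (fun t => t <= c).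
Proof.
  intros Hc. exists (mkposreal c Hc). intros t Ht _.
  unfold ball in Ht; simpl in Ht. unfold AbsRing_ball, abs, minus, plus, opp in Ht; simpl in Ht.
  apply Rabs_lt_between in Ht. lra.
Qed.

Lemma at_right_0_exists (P : R -> Prop) : at_right 0 P -> exists t, 0 < t /\ P t.
Proof.
  intros H. apply (filter_ex (F := at_right 0)).
  apply filter_and; [|exact H]. exists (mkposreal 1 Rlt_0_1). intros t _ Ht. exact Ht.
Qed.

Lemma at_right_0_mul_le K c : 0 <= K -> 0 < c -> at_right 0 (fun t => K * t <= c).
Proof.
  intros HK Hc. eapply filter_imp; [|apply (at_right_0_le (c / (K + 1)))].
  - intros t Ht. destruct (Rle_or_lt t 0); [nra|].
    apply Rle_trans with (K * (c / (K + 1))); [apply Rmult_le_compat_l; auto|].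
    apply (Rmult_le_reg_r (K + 1)); [lra|]. field_simplify; nra.
  - apply Rdiv_lt_0_compat; lra.
Qed.

Lemma exists_least_nat (P : nat -> Prop) :
  (exists n, P n) -> exists n, P n /\ forall m, (m < n)%nat -> ~ P m.
Proof.
  intros [n Hn]. revert Hn. induction n as [n IH] using lt_wf_ind. intros Hn.
  destruct (classic (exists m, (m < n)%nat /\ P m)) as [[m [Hm Pm]]|Hno].
  - exact (IH m Hm Pm).
  - exists n. split; auto. intros m Hm Pm. apply Hno. now exists m.
Qed.

Definition nonconstant (b : coef) := exists n, (1 <= n)%nat /\ b n <> RtoC 0.

Lemma nonconstant_first_index b : nonconstant b ->
  exists k, (1 <= k)%nat /\ b k <> RtoC 0 /\ forall n, (1 <= n)%nat -> (n < k)%nat -> b n = RtoC 0.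
Proof.
  intros Hb. destruct (exists_least_nat _ Hb) as [k [[Hk1 Hk] Hmin]].
  exists k. repeat split; auto.
  intros n H1 H2. apply NNPP. intros Hn. exact (Hmin n H2 (conj H1 Hn)).
Qed.

Lemma not_nonconstant b : ~ nonconstant b -> forall n, (1 <= n)%nat -> b n = RtoC 0.
Proof. intros Hb n Hn. apply NNPP. intros Hbn. apply Hb. now exists n. Qed.

Lemma pow_le_geom_tail (r Rb : R) n k : 0 <= r -> r <= Rb / 2 -> 0 < Rb -> (S k <= n)%nat ->
  r ^ n <= (2 / Rb) ^ (S k) * r ^ (S k) * Rb ^ n.
Proof.
  intros Hr HrR HRb Hn. replace n with (S k + (n - S k))%nat by lia. set (j := (n - S k)%nat).
  rewrite !pow_add.
  assert (r ^ j <= Rb ^ j) by (apply pow_incr; lra).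
  assert (H2 : (2 / Rb) ^ S k * Rb ^ S k = 2 ^ S k).
  { rewrite <- Rpow_mult_distr. replace (2 / Rb * Rb) with 2 by (field; lra). reflexivity. }
  assert (1 <= 2 ^ S k) by (apply pow_R1_Rle; lra).
  assert (0 <= r ^ S k) by (apply pow_le; auto).
  assert (0 <= r ^ j) by (apply pow_le; auto).
  replace ((2 / Rb) ^ S k * r ^ S k * (Rb ^ S k * Rb ^ j))
    with (2 ^ S k * (r ^ S k * Rb ^ j)) by (rewrite <- H2; ring).
  apply Rle_trans with (r ^ S k * Rb ^ j); [apply Rmult_le_compat_l; auto|].
  rewrite <- (Rmult_1_l (r ^ S k * Rb ^ j)) at 1.
  apply Rmult_le_compat_r; [apply Rmult_le_pos|]; lra.
Qed.

Lemma pval_lead_term_le (b : coef) Rb k : 0 < Rb -> abs_conv b Rb -> (1 <= k)%nat ->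
  (forall n, (1 <= n)%nat -> (n < k)%nat -> b n = RtoC 0) ->
  exists K, 0 <= K /\ forall z, Cmod z <= Rb / 2 ->
    Cmod (pval b z - b 0%nat - b k * Cpow z k)%C <= K * Cmod z ^ (S k).
Proof.
  intros HRb Hb Hk Hz.
  set (Sb := Series (fun n => Cmod (b n) * Rb ^ n)).
  assert (HSb : 0 <= Sb) by (apply abs_conv_Series_nonneg; auto; lra).
  assert (H2R : 0 <= 2 / Rb) by (apply Rlt_le, Rdiv_lt_0_compat; lra).
  exists ((2 / Rb) ^ S k * Sb). split; [apply Rmult_le_pos; auto; apply pow_le; auto|].
  intros z Hzr.
  pose proof (is_sum_minus _ _ _ _
                (is_sum_minus _ _ _ _ (pval_eval_abs_conv b Rb z Hb ltac:(lra))
                   (is_sum_single 0 (b 0%nat)))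
                (is_sum_single k (b k * Cpow z k)%C)) as D.
  replace ((2 / Rb) ^ S k * Sb * Cmod z ^ S k)
    with (Sb * ((2 / Rb) ^ S k * Cmod z ^ S k)) by ring.
  eapply Cmod_is_sum_le; [exact D| |].
  2: { apply (is_series_scal_r ((2 / Rb) ^ S k * Cmod z ^ S k)). apply Series_correct, Hb. }
  intros n. cbv beta.
  assert (0 <= (2 / Rb) ^ S k * Cmod z ^ S k * (Cmod (b n) * Rb ^ n)).
  { apply Rmult_le_pos; [apply Rmult_le_pos; apply pow_le; auto; apply Cmod_ge_0|].
    apply abs_conv_term_nonneg; lra. }
  replace (Cmod (b n) * Rb ^ n * ((2 / Rb) ^ S k * Cmod z ^ S k))
    with ((2 / Rb) ^ S k * Cmod z ^ S k * (Cmod (b n) * Rb ^ n)) by ring.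
  destruct (Nat.eqb_spec n 0) as [->|E0]; [|destruct (Nat.eqb_spec n k) as [->|Ek]].
  - destruct (Nat.eqb_spec 0 k); [lia|]. simpl.
    replace (b 0%nat * 1 - b 0%nat - 0)%C with (RtoC 0) by ring. rewrite Cmod_0. auto.
  - replace (b k * Cpow z k - 0 - b k * Cpow z k)%C with (RtoC 0) by ring. rewrite Cmod_0. auto.
  - destruct (le_lt_dec k n) as [Hkn|Hkn].
    + replace (b n * Cpow z n - 0 - 0)%C with (b n * Cpow z n)%C by ring.
      rewrite Cmod_mult, Cmod_pow.
      pose proof (pow_le_geom_tail (Cmod z) Rb n k (Cmod_ge_0 z) Hzr HRb ltac:(lia)).
      replace ((2 / Rb) ^ S k * Cmod z ^ S k * (Cmod (b n) * Rb ^ n))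
        with (Cmod (b n) * ((2 / Rb) ^ S k * Cmod z ^ S k * Rb ^ n)) by ring.
      apply Rmult_le_compat_l; [apply Cmod_ge_0|auto].
    + rewrite Hz by lia. replace (0 * Cpow z n - 0 - 0)%C with (RtoC 0) by ring.
      rewrite Cmod_0. lra.
Qed.

Lemma Cmod_1_plus_mul_le (s : C) t : Re s < 0 -> 0 <= t -> t * Cmod s ^ 2 <= - Re s ->
  Cmod (1 + s * RtoC t) <= 1 + Re s * t / 2.
Proof.
  intros Hs Ht Hts.
  assert (Hsq : Cmod (1 + s * RtoC t) ^ 2 = 1 + 2 * (Re s * t) + Cmod s ^ 2 * t ^ 2).
  { rewrite !Cmod2_alt. destruct s as [a b]. unfold Re, Im; simpl. ring. }
  assert (Hq : Cmod s ^ 2 * t ^ 2 <= - (Re s * t)) by nra.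
  assert (Hre : Re s ^ 2 <= Cmod s ^ 2).
  { rewrite Cmod2_alt. destruct s as [a b]. unfold Re, Im; simpl. nra. }
  assert (- 1 <= Re s * t) by nra.
  pose proof (Cmod_ge_0 (1 + s * RtoC t)). nra.
Qed.

Lemma Cmod_perturbed_lt (d0 s err : C) t tk K : 0 < Cmod d0 -> Re s < 0 -> 0 < tk <= t ->
  tk * Cmod s ^ 2 <= - Re s -> K * t <= Cmod d0 * (- Re s) / 4 -> Cmod err <= K * t * tk ->
  Cmod (d0 * (1 + s * RtoC tk) + err) < Cmod d0.
Proof.
  intros Hd0 Hs Htk Hts HKt Herr.
  pose proof (Cmod_1_plus_mul_le s tk Hs ltac:(lra) Hts) as Hlin.
  eapply Rle_lt_trans; [apply Cmod_triangle|]. rewrite Cmod_mult.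
  assert (Cmod d0 * Cmod (1 + s * RtoC tk) <= Cmod d0 * (1 + Re s * tk / 2))
    by (apply Rmult_le_compat_l; lra).
  assert (K * t * tk <= Cmod d0 * (- Re s) / 4 * tk) by (apply Rmult_le_compat_r; lra).
  assert (0 < Cmod d0 * (- Re s) * tk) by (apply Rmult_lt_0_compat; [apply Rmult_lt_0_compat|]; lra).
  lra.
Qed.

Lemma pval_decrease (b : coef) Rb c' : 0 < Rb -> abs_conv b Rb -> b 0%nat <> c' ->
  nonconstant b -> forall eps, 0 < eps ->
  exists z, Cmod z < eps /\ Cmod z <= Rb /\ Cmod (pval b z - c') < Cmod (b 0%nat - c').
Proof.
  intros HRb Hb Hb0 Hnc eps Heps.
  destruct (nonconstant_first_index b Hnc) as [k [Hk1 [Hk Hzero]]].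
  destruct (pval_lead_term_le b Rb k HRb Hb Hk1 Hzero) as [K [HK HKb]].
  set (d0 := (b 0%nat - c')%C).
  assert (Hd0 : d0 <> RtoC 0) by exact (Cminus_neq_0 _ _ Hb0).
  assert (Hd0m : 0 < Cmod d0) by (apply Cmod_gt_0; auto).
  assert (Hq : (b k / d0)%C <> RtoC 0).
  { intros E. apply Hk. replace (b k) with (b k / d0 * d0)%C by (field; auto). rewrite E. ring. }
  destruct (exists_unit_Re_neg _ k Hq Hk1) as [u [Hu Hre]].
  set (s := (b k / d0 * Cpow u k)%C) in Hre.
  assert (Hsp : 0 < Cmod s) by (apply Cmod_gt_0; intros E; rewrite E in Hre; simpl in Hre; lra).
  destruct (at_right_0_exists (fun t => t <= eps / 2 /\ t <= Rb / 2 /\ t <= 1 /\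
              t <= - Re s / Cmod s ^ 2 /\ K * t <= Cmod d0 * (- Re s) / 4)) as [t [Ht0 Ht]].
  { repeat apply filter_and; try apply at_right_0_mul_le; try apply at_right_0_le; try lra.
    - apply Rdiv_lt_0_compat; [lra|apply pow_lt; lra].
    - apply Rdiv_lt_0_compat; nra. }
  destruct Ht as [Ht1 [Ht2 [Ht3 [Ht4 Ht5]]]].
  set (z := (RtoC t * u)%C).
  assert (Hzm : Cmod z = t) by (unfold z; rewrite Cmod_mult, Cmod_R, Hu, Rabs_pos_eq; lra).
  exists z. split; [lra|]. split; [lra|].
  set (tk := t ^ k).
  assert (Htk : 0 < tk <= t).
  { split; [apply pow_lt; auto|]. unfold tk. replace k with (S (k - 1)) by lia. simpl.
    assert (t ^ (k - 1) <= 1) by (rewrite <- (pow1 (k - 1)); apply pow_incr; lra).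
    assert (0 <= t ^ (k - 1)) by (apply pow_le; lra). nra. }
  pose proof (HKb z ltac:(lra)) as HE. rewrite Hzm in HE.
  replace (K * t ^ S k) with (K * t * tk) in HE by (unfold tk; simpl; ring).
  replace (pval b z - c')%C
    with (d0 * (1 + s * RtoC tk) + (pval b z - b 0%nat - b k * Cpow z k))%C
    by (unfold z, s, tk, d0; rewrite Cpow_mult_l, <- RtoC_pow; field; auto).
  apply (Cmod_perturbed_lt _ _ _ t tk K); auto.
  apply (Rmult_le_compat_r (Cmod s ^ 2)) in Ht4; [|apply pow2_ge_0].
  replace (- Re s / Cmod s ^ 2 * Cmod s ^ 2) with (- Re s) in Ht4 by (field; lra).
  pose proof (pow2_ge_0 (Cmod s)). nra.
Qed.

Lemma glb_approx (S : R -> Prop) x0 : S x0 -> (forall x, S x -> 0 <= x) ->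
  exists m, (forall x, S x -> m <= x) /\ forall n : nat, exists x, S x /\ x < m + / (INR n + 1).
Proof.
  intros Hx0 Hpos.
  destruct (completeness (fun y => S (- y))) as [M [HM1 HM2]].
  - exists 0. intros y Hy. specialize (Hpos _ Hy). lra.
  - exists (- x0). now rewrite Ropp_involutive.
  - exists (- M). split.
    + intros x Hx. assert (S (- - x)) by now rewrite Ropp_involutive. specialize (HM1 _ H). lra.
    + intros n. apply NNPP. intros Hn.
      assert (Hpos_n : 0 < / (INR n + 1)) by (apply Rinv_0_lt_compat; pose proof (pos_INR n); lra).
      assert (HU : is_upper_bound (fun y => S (- y)) (M - / (INR n + 1))).
      { intros y Hy. apply Rnot_lt_le. intros Hlt. apply Hn. exists (- y). split; auto. lra. }
      specialize (HM2 _ HU). lra.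
Qed.

Definition strictly_increasing (phi : nat -> nat) := forall j, (phi j < phi (S j))%nat.

Lemma strictly_increasing_ge phi : strictly_increasing phi -> forall j, (j <= phi j)%nat.
Proof. intros H j. induction j; [lia|]. specialize (H j). lia. Qed.

Lemma strictly_increasing_lt phi : strictly_increasing phi ->
  forall i j, (i < j)%nat -> (phi i < phi j)%nat.
Proof.
  intros H i j Hij. induction j; [lia|].
  destruct (Nat.eq_dec i j) as [->|]; [apply H|]. specialize (IHj ltac:(lia)). specialize (H j). lia.
Qed.

Lemma inv_INR_succ_le_subseq phi j : strictly_increasing phi ->
  / (INR (phi j) + 1) <= / (INR j + 1).
Proof.
  intros H. apply Rinv_le_contravar; [pose proof (pos_INR j); lra|].
  apply Rplus_le_compat_r, le_INR, strictly_increasing_ge, H.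
Qed.

Lemma adherence_subseq (u : nat -> R) l : ValAdh u l ->
  exists phi, strictly_increasing phi /\ forall j, Rabs (u (phi j) - l) < / (INR j + 1).
Proof.
  intros Hv.
  assert (Hex : forall (p : nat * nat), exists q,
             (fst p <= q)%nat /\ Rabs (u q - l) < / (INR (snd p) + 1)).
  { intros [N j]. simpl.
    assert (Hp : 0 < / (INR j + 1)) by (apply Rinv_0_lt_compat; pose proof (pos_INR j); lra).
    destruct (Hv (disc l (mkposreal _ Hp)) N) as [q [Hq1 Hq2]].
    - exists (mkposreal _ Hp). intros y Hy. exact Hy.
    - now exists q. }
  destruct (functional_choice _ Hex) as [next Hnext].
  set (phi := fix phi j := match j with
                           | O => next (0, 0)%nat
                           | S j' => next (S (phi j'), S j') end).
  exists phi. split.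
  - intros j. simpl. destruct (Hnext (S (phi j), S j)). simpl in *. lia.
  - intros [|j]; simpl; apply Hnext.
Qed.

Lemma Cmod_le_Re_Im (z : C) : Cmod z <= Rabs (Re z) + Rabs (Im z).
Proof.
  destruct z as [a b]. unfold Cmod, Re, Im; simpl.
  pose proof (Rabs_pos a). pose proof (Rabs_pos b).
  rewrite <- (sqrt_square (Rabs a + Rabs b)) by lra.
  apply sqrt_le_1_alt.
  replace (a * (a * 1)) with (Rabs a * Rabs a) by (rewrite <- Rabs_mult, Rabs_pos_eq; nra).
  replace (b * (b * 1)) with (Rabs b * Rabs b) by (rewrite <- Rabs_mult, Rabs_pos_eq; nra).
  nra.
Qed.

Lemma bolzano_weierstrass_disk (y : nat -> C) : (forall n, Cmod (y n) <= 1) ->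
  exists phi ys, strictly_increasing phi /\ forall j, Cmod (y (phi j) - ys) < 2 / (INR j + 1).
Proof.
  intros Hy.
  assert (Hre : forall n, -1 <= Re (y n) <= 1).
  { intros n. pose proof (re_le_Cmod (y n)). specialize (Hy n). apply Rabs_le_between. lra. }
  assert (Him : forall n, -1 <= Im (y n) <= 1).
  { intros n. pose proof (Rmax_Cmod (y n)).
    pose proof (Rmax_r (Rabs (fst (y n))) (Rabs (snd (y n)))).
    specialize (Hy n). apply Rabs_le_between. unfold Im. lra. }
  destruct (Bolzano_Weierstrass (fun n => Re (y n)) _ (compact_P3 (-1) 1) Hre) as [l1 Hl1].
  destruct (adherence_subseq _ _ Hl1) as [phi1 [Hp1 Hc1]].
  destruct (Bolzano_Weierstrass (fun n => Im (y (phi1 n))) _ (compact_P3 (-1) 1)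
              (fun n => Him (phi1 n))) as [l2 Hl2].
  destruct (adherence_subseq _ _ Hl2) as [phi2 [Hp2 Hc2]].
  exists (fun j => phi1 (phi2 j)), (l1, l2). split.
  - intros j. apply strictly_increasing_lt; auto.
  - intros j. eapply Rle_lt_trans; [apply Cmod_le_Re_Im|].
    specialize (Hc2 j). specialize (Hc1 (phi2 j)).
    pose proof (inv_INR_succ_le_subseq phi2 j Hp2).
    replace (2 / (INR j + 1)) with (/ (INR j + 1) + / (INR j + 1))
      by (field; pose proof (pos_INR j); lra).
    unfold Re, Im in *. simpl. unfold Rminus in *. lra.
Qed.

Lemma Cmod_le_of_subseq (y : nat -> C) phi ys a : strictly_increasing phi ->
  (forall j, Cmod (y (phi j) - ys) < 2 / (INR j + 1)) ->
  (forall n, Cmod (y n) <= a + / (INR n + 1)) -> Cmod ys <= a.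
Proof.
  intros Hphi Hys Hy. apply Rle_of_le_plus_eps. intros e He.
  destruct (archi_inv_succ (e / 3) ltac:(lra)) as [J Hinv].
  specialize (Hys J). specialize (Hy (phi J)).
  pose proof (inv_INR_succ_le_subseq phi J Hphi).
  pose proof (Cmod_triangle_minus ys (y (phi J))). rewrite Cmod_minus_sym in Hys.
  replace (2 / (INR J + 1)) with (2 * / (INR J + 1)) in Hys by (unfold Rdiv; ring).
  lra.
Qed.

Lemma bolzano_weierstrass_closed_disk (qn : nat -> C) z0 r : 0 < r ->
  (forall n, Cmod (qn n - z0) <= r) ->
  exists phi qs, strictly_increasing phi /\ Cmod (qs - z0) <= r /\
    forall j, Cmod (qn (phi j) - qs) <= r * (2 / (INR j + 1)).
Proof.
  intros Hr Hq.
  assert (Hrne : RtoC r <> RtoC 0) by (intros E; apply RtoC_inj in E; lra).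
  set (y := fun n => ((qn n - z0) / RtoC r)%C).
  assert (Hy : forall n, Cmod (y n) <= 1).
  { intros n. unfold y, Cdiv. rewrite Cmod_mult, Cmod_inv, Cmod_R, Rabs_pos_eq by (auto; lra).
    apply (Rmult_le_reg_r r); [auto|]. specialize (Hq n). field_simplify; lra. }
  destruct (bolzano_weierstrass_disk y Hy) as [phi [ys [Hphi Hys]]].
  exists phi, (z0 + RtoC r * ys)%C. split; [auto|]. split.
  - assert (Cmod ys <= 1).
    { apply (Cmod_le_of_subseq y phi ys 1 Hphi Hys). intros n.
      pose proof (Hy n). pose proof (Rinv_0_lt_compat (INR n + 1) ltac:(pose proof (pos_INR n); lra)).
      lra. }
    replace (z0 + RtoC r * ys - z0)%C with (RtoC r * ys)%C by ring.
    rewrite Cmod_mult, Cmod_R, Rabs_pos_eq by lra. nra.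
  - intros j. replace (qn (phi j) - (z0 + RtoC r * ys))%C with (RtoC r * (y (phi j) - ys))%C
      by (unfold y; field; auto).
    rewrite Cmod_mult, Cmod_R, Rabs_pos_eq by lra.
    apply Rmult_le_compat_l; [lra|]. left. apply Hys.
Qed.

Lemma lipschitz_min_on_disk (F : C -> R) (z0 : C) (r L : R) :
  0 < r -> 0 <= L -> (forall q, 0 <= F q) ->
  (forall q q', Cmod (q - z0) <= r -> Cmod (q' - z0) <= r -> F q - F q' <= L * Cmod (q - q')) ->
  exists qs, Cmod (qs - z0) <= r /\ forall q, Cmod (q - z0) <= r -> F qs <= F q.
Proof.
  intros Hr HL HF0 HLip.
  assert (Hz0 : Cmod (z0 - z0) <= r)
    by (replace (z0 - z0)%C with (RtoC 0) by ring; rewrite Cmod_0; lra).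
  destruct (glb_approx (fun x => exists q, Cmod (q - z0) <= r /\ x = F q) (F z0))
    as [m [Hlow Happ]]; [now exists z0|intros x [q [_ ->]]; auto|].
  assert (Hpick : forall n : nat, exists q, Cmod (q - z0) <= r /\ F q < m + / (INR n + 1)).
  { intros n. destruct (Happ n) as [x [[q [Hq ->]] Hx]]. now exists q. }
  destruct (functional_choice _ Hpick) as [qn Hqn].
  destruct (bolzano_weierstrass_closed_disk qn z0 r Hr (fun n => proj1 (Hqn n)))
    as [phi [qs [Hphi [Hqs Hlim]]]].
  exists qs. split; [exact Hqs|]. intros q Hq.
  enough (F qs <= m) by (specialize (Hlow (F q) (ex_intro _ q (conj Hq eq_refl))); lra).
  apply Rle_of_le_plus_eps. intros e He.
  destruct (archi_inv_succ (e / (1 + 2 * L * r))) as [J HJ].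
  { apply Rdiv_lt_0_compat; nra. }
  destruct (Hqn (phi J)) as [HqJ HFJ].
  specialize (HLip qs (qn (phi J)) Hqs HqJ). rewrite Cmod_minus_sym in HLip.
  pose proof (inv_INR_succ_le_subseq phi J Hphi).
  assert (L * Cmod (qn (phi J) - qs) <= L * (r * (2 / (INR J + 1))))
    by (apply Rmult_le_compat_l; auto).
  apply (Rmult_lt_compat_r (1 + 2 * L * r)) in HJ; [|nra].
  replace (e / (1 + 2 * L * r) * (1 + 2 * L * r)) with e in HJ by (field; nra).
  replace (L * (r * (2 / (INR J + 1)))) with (/ (INR J + 1) * (2 * L * r)) in *
    by (field; pose proof (pos_INR J); lra).
  nra.
Qed.

Lemma taylor_circle_lower_bound c rho z0 eps : abs_conv c rho -> Cmod z0 < rho ->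
  nonconstant (taylor c z0) -> 0 < eps ->
  exists r0 mu, 0 < r0 <= eps /\ 0 < mu /\
    forall zt, Cmod zt = r0 -> mu <= Cmod (pval c (z0 + zt) - pval c z0).
Proof.
  intros Hc Hz0 Hnc Heps.
  set (b := taylor c z0). set (Rb := rho - Cmod z0).
  assert (HRb : 0 < Rb) by (unfold Rb; lra).
  destruct (nonconstant_first_index b Hnc) as [k [Hk1 [Hk Hzero]]].
  destruct (pval_lead_term_le b Rb k HRb (taylor_abs_conv c rho z0 Hc Hz0) Hk1 Hzero)
    as [K [HK HKb]].
  assert (Hbk : 0 < Cmod (b k)) by (apply Cmod_gt_0; auto).
  destruct (at_right_0_exists (fun r => r <= eps /\ r <= Rb / 2 /\ K * r <= Cmod (b k) / 2))
    as [r0 [Hr0 [Hr1 [Hr2 HKr]]]].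
  { repeat apply filter_and; [apply at_right_0_le|apply at_right_0_le|apply at_right_0_mul_le];
      lra. }
  assert (Hr0k : 0 < r0 ^ k) by (apply pow_lt; auto).
  exists r0, (Cmod (b k) * r0 ^ k / 2). split; [lra|]. split; [nra|].
  intros zt Hzt.
  rewrite <- (eval_pval _ _ _ (taylor_eval c rho z0 Hc Hz0 zt ltac:(fold Rb; lra))).
  rewrite <- (taylor_0 c rho z0 Hc Hz0). fold b.
  specialize (HKb zt ltac:(lra)). rewrite Hzt in HKb.
  pose proof (Cmod_triangle_minus (b k * Cpow zt k) (pval b zt - b 0%nat)) as Ht.
  rewrite (Cmod_minus_sym (b k * Cpow zt k)), Cmod_mult, Cmod_pow, Hzt in Ht.
  assert (K * r0 ^ S k <= Cmod (b k) / 2 * r0 ^ k)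
    by (simpl; replace (K * (r0 * r0 ^ k)) with (K * r0 * r0 ^ k) by ring;
        apply Rmult_le_compat_r; lra).
  lra.
Qed.

Lemma pval_local_min c rho q c' r : abs_conv c rho -> Cmod q < rho -> 0 < r ->
  nonconstant (taylor c q) ->
  (forall zt, Cmod zt < r -> Cmod (pval c q - c') <= Cmod (pval c (q + zt) - c')) ->
  pval c q = c'.
Proof.
  intros Hc Hq Hr Hnc Hmin. apply NNPP. intros Hne.
  rewrite <- (taylor_0 c rho q Hc Hq) in Hne, Hmin.
  destruct (pval_decrease (taylor c q) (rho - Cmod q) c' ltac:(lra)
              (taylor_abs_conv c rho q Hc Hq) Hne Hnc r Hr) as [zt [Hzt1 [Hzt2 Hzt3]]].
  rewrite (eval_pval _ _ _ (taylor_eval c rho q Hc Hq zt Hzt2)) in Hzt3.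
  specialize (Hmin zt Hzt1). lra.
Qed.

Lemma pval_dist_min_on_disk c rho z0 r0 c' : abs_conv c rho -> 0 < r0 ->
  Cmod z0 + r0 <= 1 -> 1 < rho ->
  exists qs, Cmod (qs - z0) <= r0 /\
    forall q, Cmod (q - z0) <= r0 -> Cmod (pval c qs - c') <= Cmod (pval c q - c').
Proof.
  intros Hc Hr0 Hz0 Hrho.
  assert (Hdisk : forall q, Cmod (q - z0) <= r0 -> Cmod q <= 1)
    by (intros q Hq; pose proof (Cmod_triangle_minus q z0); lra).
  apply (lipschitz_min_on_disk (fun q => Cmod (pval c q - c')) z0 r0
           (Series (fun k => Cmod (c k) * rho ^ k) / (rho - 1))); auto.
  - apply Rle_mult_inv_pos; [apply abs_conv_Series_nonneg; auto; lra|lra].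
  - intros; apply Cmod_ge_0.
  - intros q q' Hq Hq'.
    eapply Rle_trans; [|apply (pval_lipschitz c rho 1); auto; lra].
    pose proof (Cmod_triangle_minus (pval c q - c') (pval c q' - c')).
    replace (pval c q - c' - (pval c q' - c'))%C with (pval c q - pval c q')%C in * by ring. lra.
Qed.

Lemma pval_attains c rho z0 r0 mu c' : abs_conv c rho -> 0 < r0 ->
  Cmod z0 + r0 <= 1 -> 1 + 2 * r0 <= rho ->
  (forall zt, Cmod zt = r0 -> mu <= Cmod (pval c (z0 + zt) - pval c z0)) ->
  Cmod (c' - pval c z0) < mu / 2 -> exists q, Cmod (q - z0) < r0 /\ pval c q = c'.
Proof.
  intros Hc Hr0 Hz0 Hrho Hcircle Hc'.
  assert (Hmu : 0 < mu) by (pose proof (Cmod_ge_0 (c' - pval c z0)); lra).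
  destruct (pval_dist_min_on_disk c rho z0 r0 c' Hc Hr0 Hz0 ltac:(lra)) as [qs [Hqs Hmin]].
  assert (HFz0 : Cmod (pval c qs - c') < mu / 2).
  { eapply Rle_lt_trans; [apply Hmin|rewrite Cmod_minus_sym; exact Hc'].
    replace (z0 - z0)%C with (RtoC 0) by ring. rewrite Cmod_0. lra. }
  assert (Hqin : Cmod (qs - z0) < r0).
  { destruct (Rle_lt_or_eq_dec _ _ Hqs) as [|Heq]; [auto|exfalso].
    pose proof (Hcircle (qs - z0)%C Heq) as H. replace (z0 + (qs - z0))%C with qs in H by ring.
    pose proof (Cmod_triangle (pval c qs - c') (c' - pval c z0)).
    replace (pval c qs - c' + (c' - pval c z0))%C with (pval c qs - pval c z0)%C in * by ring.
    lra. }
  assert (Hqs1 : Cmod qs < 1) by (pose proof (Cmod_triangle_minus qs z0); lra).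
  destruct (classic (nonconstant (taylor c qs))) as [Hnc|Hconst].
  - exists qs. split; [auto|].
    apply (pval_local_min c rho qs c' (r0 - Cmod (qs - z0)) Hc ltac:(lra) ltac:(lra) Hnc).
    intros zt Hzt. apply Hmin.
    pose proof (Cmod_triangle (qs - z0) zt).
    replace (qs - z0 + zt)%C with (qs + zt - z0)%C in * by ring. lra.
  - exfalso. pose proof (not_nonconstant _ Hconst) as Hc1.
    assert (Hconst_at : forall q, Cmod (q - qs) <= 2 * r0 -> pval c q = pval c qs).
    { intros q Hq. replace q with (qs + (q - qs))%C by ring.
      apply (pval_taylor_const c rho); auto; lra. }
    assert (Hr0m : Cmod (RtoC r0) = r0) by (rewrite Cmod_R, Rabs_pos_eq; lra).
    pose proof (Hcircle (RtoC r0) Hr0m) as H.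
    rewrite (Hconst_at z0), (Hconst_at (z0 + RtoC r0)%C) in H.
    + replace (pval c qs - pval c qs)%C with (RtoC 0) in H by ring. rewrite Cmod_0 in H. lra.
    + pose proof (Cmod_triangle (RtoC r0) (z0 - qs)). rewrite Cmod_minus_sym in Hqs.
      replace (RtoC r0 + (z0 - qs))%C with (z0 + RtoC r0 - qs)%C in * by ring. lra.
    + rewrite Cmod_minus_sym. lra.
Qed.

Lemma pval_open c rho z0 : abs_conv c rho -> 1 < rho -> Cmod z0 < 1 ->
  nonconstant (taylor c z0) -> exists delta, 0 < delta /\
    forall c', Cmod (c' - pval c z0) < delta -> exists q, Cmod q < 1 /\ pval c q = c'.
Proof.
  intros Hc Hrho Hz0 Hnc.
  destruct (taylor_circle_lower_bound c rho z0 (Rmin ((1 - Cmod z0) / 2) ((rho - 1) / 2)) Hc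
              ltac:(lra) Hnc ltac:(apply Rmin_glb_lt; lra)) as [r0 [mu [[Hr0 Hr0e] [Hmu Hcircle]]]].
  pose proof (Rmin_l ((1 - Cmod z0) / 2) ((rho - 1) / 2)).
  pose proof (Rmin_r ((1 - Cmod z0) / 2) ((rho - 1) / 2)).
  exists (mu / 2). split; [lra|]. intros c' Hc'.
  destruct (pval_attains c rho z0 r0 mu c' Hc Hr0 ltac:(lra) ltac:(lra) Hcircle Hc')
    as [q [Hq Hqc]].
  exists q. split; [|exact Hqc]. pose proof (Cmod_triangle_minus q z0). lra.
Qed.

(** * The locally uniform topology and the functional [lambda] *)

Definition cdiff (h h' : coef) : coef := fun k => (h k - h' k)%C.

Lemma abs_conv_cdiff h h' r : abs_conv h r -> abs_conv h' r -> 0 <= r -> abs_conv (cdiff h h') r.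
Proof.
  intros H1 H2 Hr.
  apply (ex_series_nonneg_le _ (fun k => Cmod (h k) * r ^ k + Cmod (h' k) * r ^ k)).
  - intros k. split; [apply abs_conv_term_nonneg; auto|]. unfold cdiff.
    assert (0 <= r ^ k) by (apply pow_le; auto).
    assert (Cmod (h k - h' k) <= Cmod (h k) + Cmod (h' k)).
    { unfold Cminus. eapply Rle_trans; [apply Cmod_triangle|]. rewrite Cmod_opp. lra. }
    nra.
  - apply (ex_series_plus (K := R_AbsRing) (V := R_NormedModule)); auto.
Qed.

Lemma eval_cdiff h h' z u v : eval h z u -> eval h' z v -> eval (cdiff h h') z (u - v)%C.
Proof.
  intros H1 H2. eapply is_sum_ext; [|exact (is_sum_minus _ _ _ _ H1 H2)].
  intros n; unfold cdiff; simpl; ring.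
Qed.

Lemma lu_near_coef_le h h' r eps : in_A h -> in_A h' -> 0 < r < 1 -> lu_near h r eps h' ->
  forall k, Cmod (h k - h' k) * r ^ k <= eps.
Proof.
  intros Hh Hh' Hr Hn k.
  assert (Hhr : abs_conv h r) by (apply Hh; lra).
  assert (Hh'r : abs_conv h' r) by (apply Hh'; lra).
  apply (cauchy_estimate (cdiff h h') r eps k); [lra|apply abs_conv_cdiff; auto; lra|].
  intros z Hz.
  destruct (eval_exists h r z Hhr ltac:(lra)) as [u Hu].
  destruct (eval_exists h' r z Hh'r ltac:(lra)) as [v Hv].
  rewrite (eval_pval _ _ _ (eval_cdiff _ _ _ _ _ Hu Hv)).
  apply Rlt_le, (Hn z u v); auto. lra.
Qed.

Lemma lu_near_refl h r eps : 0 < eps -> lu_near h r eps h.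
Proof.
  intros He z u v _ Hu Hv. rewrite (is_sum_unique _ _ _ Hu Hv).
  replace (v - v)%C with (RtoC 0) by ring. rewrite Cmod_0. auto.
Qed.

(** The open ball of radius [eps] for the seminorm [sup_{|z| <= r}]. *)
Definition lu_ball (h0 : coef) (r eps : R) (h : coef) : Prop :=
  exists eps', eps' < eps /\ lu_near h0 r eps' h.

Lemma lu_ball_open h0 r eps : 0 <= r < 1 -> lu_open (lu_ball h0 r eps).
Proof.
  intros Hr h Hh [eps' [He Hn]]. exists r, ((eps - eps') / 2). split; [auto|]. split; [lra|].
  intros g Hg Hng. exists (eps' + (eps - eps') / 2). split; [lra|].
  intros z u v Hz Hu Hv.
  destruct (eval_exists h r z (Hh r Hr) Hz) as [t Ht].
  specialize (Hn z u t Hz Hu Ht). specialize (Hng z t v Hz Ht Hv).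
  replace (u - v)%C with ((u - t) + (t - v))%C by ring.
  eapply Rle_lt_trans; [apply Cmod_triangle|]. lra.
Qed.

Lemma lu_ball_center h r eps : 0 < eps -> lu_ball h r eps h.
Proof. intros. exists (eps / 2). split; [lra|]. apply lu_near_refl. lra. Qed.

Fixpoint list_max {I : Type} (F : I -> nat) (l : list I) : nat :=
  match l with nil => 0%nat | cons i l' => Nat.max (F i) (list_max F l') end.

Lemma list_max_In {I : Type} (F : I -> nat) l i : In i l -> (F i <= list_max F l)%nat.
Proof. induction l; simpl; [tauto|]. intros [->|E]; [lia|]. specialize (IHl E). lia. Qed.

(** Every sequence in a compact [V] has a cluster point in [V]: otherwise the balls
    eventually avoided by the sequence would form an open cover of [V] with no finite subcover. *)
Lemma lu_compact_cluster (V : coef -> Prop) (hs : nat -> coef) : lu_compact V ->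
  (forall n, V (hs n)) ->
  exists h, V h /\ forall r eps N, 0 <= r < 1 -> 0 < eps ->
    exists n, (N <= n)%nat /\ lu_near h r eps (hs n).
Proof.
  intros [_ Hcov] Hs. apply NNPP. intros Hno.
  assert (Hall : forall h, V h -> exists r eps N, (0 <= r < 1 /\ 0 < eps) /\
                   forall n, (N <= n)%nat -> ~ lu_near h r eps (hs n)).
  { intros h Hh. apply NNPP. intros Hn. apply Hno. exists h. split; [auto|].
    intros r eps N Hr He. apply NNPP. intros Hn2. apply Hn. exists r, eps, N. split; [auto|].
    intros n Hn3 Hl. apply Hn2. now exists n. }
  set (I := { p : coef * R * R * nat | let '(h, r, eps, N) := p in V h /\ (0 <= r < 1 /\ 0 < eps) /\
                forall n, (N <= n)%nat -> ~ lu_near h r eps (hs n) }).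
  set (U := fun i : I => let '(h, r, eps, N) := proj1_sig i in lu_ball h r eps).
  set (idx := fun i : I => let '(_, _, _, N) := proj1_sig i in N).
  destruct (Hcov I U) as [l Hl].
  - intros [[[[h r] eps] N] Hp]. apply lu_ball_open. simpl in Hp. tauto.
  - intros f Hf. destruct (Hall f Hf) as [r [eps [N [Hre Hn]]]].
    exists (exist _ (f, r, eps, N) (conj Hf (conj Hre Hn))). apply lu_ball_center. tauto.
  - set (Nm := list_max idx l).
    destruct (Hl (hs Nm) (Hs Nm)) as [i [Hi HU]].
    pose proof (list_max_In idx l i Hi) as HM. fold Nm in HM.
    destruct i as [[[[h r] eps] N] [Hh [Hre Hn]]]. simpl in HM, HU.
    destruct HU as [eps' [He' Hnear]]. apply (Hn Nm HM).
    intros z u v Hz Hu Hv. specialize (Hnear z u v Hz Hu Hv). lra.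
Qed.

Definition lam (g h : coef) : C := pval (hadamard h g) 1%C.

Lemma lam_eval g h : in_A h -> in_Abar g -> eval (hadamard h g) 1%C (lam g h).
Proof.
  intros Hh Hg. destruct (hadamard_abs_conv h g Hh Hg) as [rho [Hrho Hc]].
  apply pval_eval_abs_conv with rho; auto. rewrite Cmod_1; lra.
Qed.

Lemma lam_image_lam V g w : (forall f, V f -> in_A0 f) -> in_Abar g ->
  lam_image V g w <-> exists f, V f /\ lam g f = w.
Proof.
  intros HV0 Hg. split.
  - intros [f [Hf Hw]]. exists f. split; [auto|]. now apply eval_pval.
  - intros [f [Hf <-]]. exists f. split; [auto|]. apply lam_eval; [apply HV0|]; auto.
Qed.

Lemma lam_continuous g h eta : in_Abar g -> in_A h -> 0 < eta ->
  exists r eps, (0 <= r < 1 /\ 0 < eps) /\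
    forall h', in_A h' -> lu_near h r eps h' -> Cmod (lam g h - lam g h') < eta.
Proof.
  intros [R0 [HR0 Hg]] Hh He.
  assert (Hgb : in_Abar g) by (exists R0; auto).
  set (S := Series (fun k => Cmod (g k) * R0 ^ k)).
  assert (HS : 0 <= S) by (apply abs_conv_Series_nonneg; auto; lra).
  assert (Hr : 0 < / R0 < 1).
  { split; [apply Rinv_0_lt_compat; lra|]. rewrite <- Rinv_1. apply Rinv_lt_contravar; lra. }
  exists (/ R0), (eta / (2 * (S + 1))). split; [split; [lra|apply Rdiv_lt_0_compat; lra]|].
  intros h' Hh' Hn.
  pose proof (lu_near_coef_le h h' (/ R0) _ Hh Hh' Hr Hn) as Hk.
  apply Rle_lt_trans with (eta / (2 * (S + 1)) * S).
  - apply (Cmod_is_sum_le _ _ (fun n => eta / (2 * (S + 1)) * (Cmod (g n) * R0 ^ n)) _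
             (eval_cdiff _ _ _ _ _ (lam_eval g h Hh Hgb) (lam_eval g h' Hh' Hgb))).
    + intros n. unfold cdiff, hadamard. rewrite Cpow_1_l, Cmod_mult, Cmod_1, Rmult_1_r.
      replace (h n * g n - h' n * g n)%C with ((h n - h' n) * g n)%C by ring.
      rewrite Cmod_mult. specialize (Hk n). rewrite pow_inv in Hk.
      assert (0 < R0 ^ n) by (apply pow_lt; lra).
      assert (Cmod (h n - h' n) <= eta / (2 * (S + 1)) * R0 ^ n).
      { apply (Rmult_le_reg_r (/ R0 ^ n)); [apply Rinv_0_lt_compat; auto|].
        replace (eta / (2 * (S + 1)) * R0 ^ n * / R0 ^ n) with (eta / (2 * (S + 1)))
          by (field; lra).
        auto. }
      pose proof (Cmod_ge_0 (g n)). nra.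
    + exact (is_series_scal (K := R_AbsRing) (V := R_NormedModule) _ _ _ (Series_correct _ Hg)).
  - apply (Rmult_lt_reg_r (2 * (S + 1))); [lra|].
    replace (eta / (2 * (S + 1)) * S * (2 * (S + 1))) with (eta * S) by (field; lra). nra.
Qed.

Lemma lam_image_dist_pos V g w : lu_compact V -> in_Abar g -> (forall f, V f -> lam g f <> w) ->
  exists d, 0 < d /\ forall f, V f -> d <= Cmod (lam g f - w).
Proof.
  intros [HA Hcov] Hg Hne.
  set (U := fun (n : nat) (h : coef) => in_A h /\ / (INR n + 1) < Cmod (lam g h - w)).
  destruct (Hcov nat U) as [l Hl].
  - intros n h Hh [_ Hu].
    destruct (lam_continuous g h (Cmod (lam g h - w) - / (INR n + 1)) Hg Hh ltac:(lra))
      as [r [eps [Hre Hc]]].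
    exists r, eps. split; [tauto|]. split; [tauto|]. intros h' Hh' Hn. split; [auto|].
    specialize (Hc h' Hh' Hn).
    pose proof (Cmod_triangle (lam g h - lam g h') (lam g h' - w)) as Ht.
    replace ((lam g h - lam g h') + (lam g h' - w))%C with (lam g h - w)%C in Ht by ring. lra.
  - intros f Hf.
    assert (Hpos : 0 < Cmod (lam g f - w)).
    { apply Cmod_gt_0. intros E. apply (Hne f Hf).
      replace (lam g f) with (lam g f - w + w)%C by ring. rewrite E. ring. }
    destruct (archi_inv_succ _ Hpos) as [n Hn]. exists n. split; [apply HA; auto|exact Hn].
  - set (M := list_max (fun n => n) l).
    exists (/ (INR M + 1)). split; [apply Rinv_0_lt_compat; pose proof (pos_INR M); lra|].
    intros f Hf. destruct (Hl f Hf) as [n [Hin [_ Hn]]].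
    pose proof (list_max_In (fun n => n) l n Hin) as Hm. fold M in Hm. apply le_INR in Hm.
    pose proof (pos_INR n). eapply Rle_trans; [|apply Rlt_le, Hn].
    apply Rinv_le_contravar; lra.
Qed.

(** * Border elements *)

Lemma Pmap_Pmap x y h : Pmap x (Pmap y h) = Pmap (y * x)%C h.
Proof. apply functional_extensionality. intros k. unfold Pmap. rewrite Cpow_mult_l. ring. Qed.

Lemma Pmap_1 h : Pmap 1%C h = h.
Proof. apply functional_extensionality. intros k. unfold Pmap. rewrite Cpow_1_l. ring. Qed.

Lemma Pmap_0 (h : coef) : h 0%nat = 1%C -> Pmap (RtoC 0) h = e_one.
Proof.
  intros H. apply functional_extensionality. intros [|k]; unfold Pmap, e_one; simpl.
  - rewrite H. ring.
  - ring.
Qed.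

Lemma eval_hadamard_Pmap_l f g x w :
  eval (hadamard (Pmap x f) g) 1%C w <-> eval (hadamard f g) x w.
Proof.
  split; apply is_sum_ext; intros k; unfold hadamard, Pmap; rewrite Cpow_1_l; ring.
Qed.

Lemma eval_hadamard_Pmap_r f g x w :
  eval (hadamard f g) x w -> eval (hadamard f (Pmap x g)) 1%C w.
Proof. apply is_sum_ext. intros k. unfold hadamard, Pmap. rewrite Cpow_1_l. ring. Qed.

Lemma eval_hadamard_e_one_r f z : eval (hadamard f e_one) z (f 0%nat).
Proof.
  apply (is_sum_ext (fun n => if Nat.eqb n 0 then f 0%nat else RtoC 0)); [|apply is_sum_single].
  intros [|n]; unfold hadamard, e_one; simpl; ring.
Qed.

Lemma eval_hadamard_e_one_l g z : eval (hadamard e_one g) z (g 0%nat).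
Proof.
  apply (is_sum_ext (fun n => if Nat.eqb n 0 then g 0%nat else RtoC 0)); [|apply is_sum_single].
  intros [|n]; unfold hadamard, e_one; simpl; ring.
Qed.

Lemma in_A_e_one : in_A e_one.
Proof.
  intros r Hr. apply (ex_series_incr_1 (K := R_AbsRing) (V := R_NormedModule)).
  apply (ex_series_ext (K := R_AbsRing) (V := R_NormedModule) (fun _ => 0)).
  - intros n. simpl. rewrite Cmod_0. symmetry. apply Rmult_0_l.
  - exists 0. exact (Re_is_sum _ _ (is_sum_0 (fun _ => RtoC 0) (fun _ => eq_refl))).
Qed.

Lemma bor_in_A V f : (forall f, V f -> in_A0 f) -> bor V f -> in_A f.
Proof. intros HV0 [[_ ->]|[_ [Hf _]]]; [apply in_A_e_one|apply HV0; auto]. Qed.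

Lemma Pmap_eq_of_approx (f hs : coef) (ys : C) : Cmod ys <= 1 ->
  (forall k e, 0 < e -> exists h y, f = Pmap y h /\ Cmod y <= 1 /\
                       Cmod (hs k - h k) <= e /\ Cmod (y - ys) <= e) ->
  f = Pmap ys hs.
Proof.
  intros Hys Happ. apply functional_extensionality. intros k. unfold Pmap.
  replace (f k) with (f k - hs k * Cpow ys k + hs k * Cpow ys k)%C by ring.
  rewrite (Cmod_le_eps (f k - hs k * Cpow ys k)%C); [ring|]. intros e He.
  set (A := 1 + Cmod (hs k) * INR k).
  assert (HA : 0 < A) by (pose proof (Cmod_ge_0 (hs k)); pose proof (pos_INR k); unfold A; nra).
  destruct (Happ k (e / A) ltac:(apply Rdiv_lt_0_compat; lra)) as [h [y [-> [Hy [Hh Hyd]]]]].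
  unfold Pmap.
  replace (h k * Cpow y k - hs k * Cpow ys k)%C
    with (- (hs k - h k) * Cpow y k + hs k * (Cpow y k - Cpow ys k))%C by ring.
  eapply Rle_trans; [apply Cmod_triangle|]. rewrite !Cmod_mult, Cmod_opp.
  pose proof (Cmod_pow_le_1 y k Hy). pose proof (Cpow_diff_le_1 y ys k Hy Hys).
  pose proof (Cmod_ge_0 (hs k)). pose proof (Cmod_ge_0 (hs k - h k)). pose proof (pos_INR k).
  assert (Cmod (hs k) * Cmod (Cpow y k - Cpow ys k) <= Cmod (hs k) * (INR k * (e / A))).
  { apply Rmult_le_compat_l; [auto|]. eapply Rle_trans; [eauto|].
    apply Rmult_le_compat_l; auto. }
  assert (Cmod (hs k - h k) * Cmod (Cpow y k) <= e / A) by nra.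
  replace e with (e / A + Cmod (hs k) * (INR k * (e / A)))
    by (unfold A in *; field; lra).
  lra.
Qed.

(** Every [f] in a compact [V] is [P_x h] with [h] in [V] and [|x|] minimal: take
    representations with [|x|] approaching the infimum, then a limit of the [x]'s
    and a cluster point of the [h]'s. *)
Lemma min_representation V f : (forall f, V f -> in_A0 f) -> lu_compact V -> V f ->
  exists h x, V h /\ Cmod x <= 1 /\ f = Pmap x h /\
    forall h' y, V h' -> Cmod y <= 1 -> f = Pmap y h' -> Cmod x <= Cmod y.
Proof.
  intros HV0 Hc Hf.
  set (Rep := fun y => exists h, V h /\ Cmod y <= 1 /\ f = Pmap y h).
  assert (Hrep1 : Rep 1%C).
  { exists f. rewrite Cmod_1, Pmap_1. repeat split; auto; lra. }
  destruct (glb_approx (fun s => exists y, Rep y /\ s = Cmod y) 1) as [m [Hlow Happ]].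
  { exists 1%C. split; [exact Hrep1|symmetry; apply Cmod_1]. }
  { intros s [y [_ ->]]. apply Cmod_ge_0. }
  assert (Hpick : forall n : nat, exists p : coef * C,
             V (fst p) /\ Cmod (snd p) <= 1 /\ f = Pmap (snd p) (fst p) /\
             Cmod (snd p) < m + / (INR n + 1)).
  { intros n. destruct (Happ n) as [s [[y [[h [Hh [Hy Ef]]] ->]] Hs]]. now exists (h, y). }
  destruct (functional_choice _ Hpick) as [p Hp].
  destruct (bolzano_weierstrass_disk (fun n => snd (p n)) (fun n => proj1 (proj2 (Hp n))))
    as [phi [ys [Hphi Hys]]].
  destruct (lu_compact_cluster V (fun j => fst (p (phi j))) Hc (fun j => proj1 (Hp (phi j))))
    as [hs [Hhs Hcl]].
  assert (Hysm : Cmod ys <= m).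
  { apply (Cmod_le_of_subseq (fun n => snd (p n)) phi ys m Hphi Hys).
    intros n. destruct (Hp n) as [_ [_ [_ Hlt]]]. lra. }
  assert (Hm1 : m <= 1) by (apply Hlow; exists 1%C; split; [exact Hrep1|symmetry; apply Cmod_1]).
  exists hs, ys. repeat split; [auto|lra| |].
  - apply Pmap_eq_of_approx; [lra|]. intros k e He.
    destruct (archi_inv_succ (e / 2) ltac:(lra)) as [J HJ].
    assert (H2k : 0 < (/ 2) ^ k) by (apply pow_lt; lra).
    destruct (Hcl (/ 2) (e * (/ 2) ^ k) J ltac:(lra) ltac:(nra)) as [j [Hj Hnear]].
    destruct (Hp (phi j)) as [HV [Hy1 [Ef _]]].
    exists (fst (p (phi j))), (snd (p (phi j))). repeat split; auto.
    + pose proof (lu_near_coef_le hs _ (/ 2) _ (proj1 (HV0 _ Hhs)) (proj1 (HV0 _ HV))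
                    ltac:(lra) Hnear k).
      apply (Rmult_le_reg_r ((/ 2) ^ k)); auto.
    + left. eapply Rlt_le_trans; [apply Hys|]. apply le_INR in Hj.
      assert (/ (INR j + 1) <= / (INR J + 1))
        by (apply Rinv_le_contravar; [pose proof (pos_INR J)|]; lra).
      unfold Rdiv. lra.
  - intros h' y Hh' Hy Ef.
    assert (m <= Cmod y) by (apply Hlow; exists y; split; [exists h'; auto|reflexivity]).
    lra.
Qed.

Lemma bor_of_min_representation V f h x : (forall f, V f -> in_A0 f) -> f <> e_one ->
  V f -> V h -> Cmod x <= 1 -> f = Pmap x h ->
  (forall h' y, V h' -> Cmod y <= 1 -> f = Pmap y h' -> Cmod x <= Cmod y) -> bor V h.
Proof.
  intros HV0 Hfe Hf Hh Hx Ef Hmin. right. split; [intros Hs; apply Hfe, Hs, Hf|].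
  split; [auto|]. intros g y Hg Hy Eh.
  assert (Hx0 : 0 < Cmod x).
  { destruct (Rle_lt_or_eq_dec 0 (Cmod x) (Cmod_ge_0 x)) as [H|H]; [auto|exfalso].
    apply Hfe. symmetry in H. apply Cmod_eq_0 in H. rewrite Ef, H. apply Pmap_0, HV0, Hh. }
  assert (Hyx : Cmod (y * x) <= 1) by (rewrite Cmod_mult; pose proof (Cmod_ge_0 y); nra).
  specialize (Hmin g (y * x)%C Hg Hyx ltac:(rewrite Ef, Eh; apply Pmap_Pmap)).
  rewrite Cmod_mult in Hmin. pose proof (Cmod_ge_0 y). nra.
Qed.

Lemma exists_bor_representation V f : (forall f, V f -> in_A0 f) -> lu_compact V ->
  V f -> f <> e_one -> exists h x, bor V h /\ Cmod x <= 1 /\ f = Pmap x h.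
Proof.
  intros HV0 Hc Hf Hfe.
  destruct (min_representation V f HV0 Hc Hf) as [h [x [Hh [Hx [Ef Hmin]]]]].
  exists h, x. split; [|auto]. eapply bor_of_min_representation; eauto.
Qed.

Lemma exists_unit_near z0 : Cmod z0 <= 1 -> exists u, Cmod u = 1 /\ Cmod (u - z0) = 1 - Cmod z0.
Proof.
  intros Hz. destruct (Ceq_dec z0 (RtoC 0)) as [->|E].
  - exists (RtoC 1). rewrite Cmod_0. replace (RtoC 1 - RtoC 0)%C with (RtoC 1) by ring.
    rewrite Cmod_1. split; lra.
  - assert (Hm : 0 < Cmod z0) by (apply Cmod_gt_0; auto).
    exists (z0 * RtoC (/ Cmod z0))%C. split.
    + rewrite Cmod_mult, Cmod_R, Rabs_pos_eq; [field; lra|left; apply Rinv_0_lt_compat; auto].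
    + replace (z0 * RtoC (/ Cmod z0) - z0)%C with (z0 * RtoC (/ Cmod z0 - 1))%C
        by (rewrite RtoC_minus; ring).
      assert (1 <= / Cmod z0) by (rewrite <- Rinv_1; apply Rinv_le_contravar; lra).
      rewrite Cmod_mult, Cmod_R, Rabs_pos_eq; [field; lra|lra].
Qed.

(** * The dual set and the image [lambda(V)] *)

(** [gc g c] is the normalisation of [g - c e] that lies in [A_0(closed D)], so that
    [(h * gc g c)(1) = (lambda(h) - c h_0) / (g_0 - c)]. *)
Definition gc (g : coef) (c : C) : coef := fun k => ((g k - c * e_one k) / (g 0%nat - c))%C.

Lemma gc_in_Abar0 g c : in_Abar g -> g 0%nat <> c -> in_Abar0 (gc g c).
Proof.
  intros [R0 [HR0 Hg]] Hc. pose proof (Cminus_neq_0 _ _ Hc) as Hgc. split.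
  - exists R0. split; [auto|].
    apply (ex_series_incr_1 (K := R_AbsRing) (V := R_NormedModule)).
    apply (ex_series_incr_1 (K := R_AbsRing) (V := R_NormedModule)) in Hg.
    apply (ex_series_nonneg_le _ (fun k => / Cmod (g 0%nat - c)%C * (Cmod (g (S k)) * R0 ^ (S k)))).
    + intros k. split; [apply abs_conv_term_nonneg; lra|right].
      unfold gc, e_one. replace (g (S k) - c * 0)%C with (g (S k)) by ring.
      unfold Cdiv. rewrite Cmod_mult, Cmod_inv by auto. ring.
    + apply (ex_series_scal_l (K := R_AbsRing) (V := R_NormedModule)). exact Hg.
  - unfold gc, e_one. field. auto.
Qed.

Lemma eval_hadamard_gc f g c z w : g 0%nat <> c -> eval (hadamard f g) z w ->
  eval (hadamard f (gc g c)) z ((w - c * f 0%nat) / (g 0%nat - c))%C.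
Proof.
  intros Hc H. pose proof (Cminus_neq_0 _ _ Hc) as Hgc.
  pose proof (is_sum_scal (/ (g 0%nat - c)) _ _
                (is_sum_minus _ _ _ _ H (is_sum_scal c _ _ (eval_hadamard_e_one_r f z)))) as E.
  replace ((w - c * f 0%nat) / (g 0%nat - c))%C
    with (/ (g 0%nat - c) * (w - c * f 0%nat))%C by (field; auto).
  eapply is_sum_ext; [|exact E].
  intros k. unfold hadamard, gc. field. auto.
Qed.

Lemma first_departure (u : nat -> C) a d N : u 0%nat = a ->
  (forall j, (j < N)%nat -> Cmod (u (S j) - u j) < d) ->
  u N = a \/ exists j, (j <= N)%nat /\ u j <> a /\ Cmod (u j - a) < d.
Proof.
  intros H0 Hstep. induction N; [now left|].
  destruct IHN as [E|[j [Hj Hja]]]; [intros; apply Hstep; lia| |right; exists j; split; [lia|auto]].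
  destruct (Ceq_dec (u (S N)) a) as [E2|E2]; [now left|].
  right. exists (S N). repeat split; auto. rewrite <- E. apply Hstep. lia.
Qed.

Section LambdaImage.

Variables (V : coef -> Prop) (g : coef).
Hypothesis V_A0 : forall f, V f -> in_A0 f.
Hypothesis V_compact : lu_compact V.
Hypothesis VT_complete : complete (dualT V).
Hypothesis g_Abar : in_Abar g.

Lemma lam_image_of_value f z w : V f -> Cmod z <= 1 -> eval (hadamard f g) z w ->
  w <> g 0%nat -> lam_image V g w.
Proof.
  intros Hf Hz Hw Hw0. apply NNPP. intros Hn.
  pose proof (Cminus_neq_0 _ _ (not_eq_sym Hw0)) as Hgw.
  assert (Hd : dualT V (gc g w)).
  { split; [apply gc_in_Abar0; auto|].
    intros h Hh u Hu Hu0. apply Hn. exists h. split; [auto|].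
    destruct (V_A0 h Hh) as [HhA Hh0].
    pose proof (eval_hadamard_gc h g w 1%C (lam g h) (not_eq_sym Hw0) (lam_eval g h HhA g_Abar)) as E.
    assert (Hlam : lam g h = w).
    { replace (lam g h) with ((lam g h - w * h 0%nat) / (g 0%nat - w) * (g 0%nat - w) + w)%C
        by (rewrite Hh0; field; auto).
      rewrite <- (is_sum_unique _ _ _ Hu E), Hu0. ring. }
    rewrite <- Hlam. apply lam_eval; auto. }
  destruct (VT_complete _ z Hd Hz) as [_ Hd2].
  destruct (V_A0 f Hf) as [_ Hf0].
  apply (Hd2 f Hf ((w - w * f 0%nat) / (g 0%nat - w))%C).
  - apply eval_hadamard_Pmap_r, eval_hadamard_gc; auto.
  - rewrite Hf0. field. auto.
Qed.

(** [g_0 = (f * g)(0)] is joined to [lambda(f)] by the path [t |-> (f * g)(t)], [t] in [[0,1]];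
    if [g_0] were at positive distance [d] from [lambda(V)], some point of the path within [d]
    of [g_0] and different from it would lie in [lambda(V)] by [lam_image_of_value]. *)
Lemma lam_image_g0 f : V f -> lam_image V g (g 0%nat).
Proof.
  intros Hf. apply NNPP. intros Hn.
  destruct (lam_image_dist_pos V g (g 0%nat) V_compact g_Abar) as [d [Hd Hdist]].
  { intros h Hh E. apply Hn, (lam_image_lam V g _ V_A0 g_Abar). now exists h. }
  destruct (V_A0 f Hf) as [HfA Hf0].
  destruct (hadamard_abs_conv f g HfA g_Abar) as [rho [Hrho Hconv]].
  set (c := hadamard f g) in *.
  set (L := Series (fun k => Cmod (c k) * rho ^ k) / (rho - 1)).
  assert (HL : 0 <= L) by (apply Rle_mult_inv_pos; [apply abs_conv_Series_nonneg|]; auto; lra).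
  destruct (archimed_cor1 (d / (L + 1)) ltac:(apply Rdiv_lt_0_compat; lra)) as [N [HN HN0]].
  assert (HNpos : 0 < INR N) by (apply lt_0_INR; lia).
  assert (HLN : L / INR N < d).
  { apply (Rmult_lt_compat_l (L + 1)) in HN; [|lra].
    replace ((L + 1) * (d / (L + 1))) with d in HN by (field; lra).
    apply Rle_lt_trans with ((L + 1) * / INR N); [|exact HN].
    unfold Rdiv. apply Rmult_le_compat_r; [left; apply Rinv_0_lt_compat|]; lra. }
  set (t := fun j : nat => RtoC (INR j / INR N)).
  assert (Ht : forall j, (j <= N)%nat -> Cmod (t j) <= 1).
  { intros j Hj. unfold t. rewrite Cmod_R, Rabs_pos_eq.
    - apply (Rmult_le_reg_r (INR N)); [auto|].
      replace (INR j / INR N * INR N) with (INR j) by (field; lra).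
      rewrite Rmult_1_l. apply le_INR; auto.
    - apply Rle_mult_inv_pos; [apply pos_INR|auto]. }
  destruct (first_departure (fun j => pval c (t j)) (g 0%nat) d N) as [E|[j [Hj [Hj0 Hjd]]]].
  - unfold t. replace (INR 0 / INR N) with 0 by (simpl; unfold Rdiv; ring).
    rewrite (eval_pval _ _ _ (eval_0 _)). unfold c, hadamard. rewrite Hf0. ring.
  - intros j Hj. eapply Rle_lt_trans.
    + exact (pval_lipschitz c rho 1 _ _ Hconv ltac:(lra) (Ht (S j) ltac:(lia)) (Ht j ltac:(lia))).
    + fold L. unfold t. rewrite <- RtoC_minus, Cmod_R, S_INR.
      replace ((INR j + 1) / INR N - INR j / INR N) with (/ INR N) by (field; lra).
      rewrite Rabs_pos_eq; [exact HLN|left; apply Rinv_0_lt_compat; auto].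
  - replace (t N) with (RtoC 1) in E by (unfold t; f_equal; field; lra).
    specialize (Hdist f Hf). unfold lam in Hdist. fold c in Hdist. rewrite E in Hdist.
    replace (g 0%nat - g 0%nat)%C with (RtoC 0) in Hdist by ring. rewrite Cmod_0 in Hdist. lra.
  - destruct (lam_image_of_value f (t j) _ Hf (Ht j Hj)
                (pval_eval_abs_conv c rho (t j) Hconv ltac:(pose proof (Ht j Hj); lra)) Hj0)
      as [h [Hh Hhc]].
    specialize (Hdist h Hh). unfold lam in Hdist. rewrite (eval_pval _ _ _ Hhc) in Hdist. lra.
Qed.

Lemma lam_image_sub_border w : lam_image V g w ->
  exists f, bor V f /\ exists z, Cmod z <= 1 /\ eval (hadamard f g) z w.
Proof.
  intros [f [Hf Hw]].
  destruct (classic (f = e_one)) as [->|Hfe].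
  - rewrite (is_sum_unique _ _ _ Hw (eval_hadamard_e_one_l g 1%C)).
    destruct (classic (is_singleton_e V)) as [Hs|Hs].
    + exists e_one. split; [left; auto|]. exists 1%C. split; [rewrite Cmod_1; lra|].
      apply eval_hadamard_e_one_l.
    + assert (Hh : exists h, V h /\ h <> e_one).
      { apply NNPP. intros Hn. apply Hs. intros h. split; [|intros ->; auto].
        intros Hh. apply NNPP. intros Hne. apply Hn. now exists h. }
      destruct Hh as [h [Hh Hhe]].
      destruct (exists_bor_representation V h V_A0 V_compact Hh Hhe) as [hs [x [Hb [_ _]]]].
      exists hs. split; [auto|]. exists (RtoC 0). split; [rewrite Cmod_0; lra|].
      pose proof (eval_0 (hadamard hs g)) as E. unfold hadamard at 2 in E.
      destruct Hb as [[_ ->]|[_ [Hhs _]]].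
      * rewrite <- (Cmult_1_l (g 0%nat)). exact E.
      * rewrite (proj2 (V_A0 hs Hhs)), Cmult_1_l in E. exact E.
  - destruct (exists_bor_representation V f V_A0 V_compact Hf Hfe) as [hs [x [Hb [Hx ->]]]].
    exists hs. split; [auto|]. exists x. split; [auto|]. now apply eval_hadamard_Pmap_l.
Qed.

Lemma border_sub_lam_image w f z : bor V f -> Cmod z <= 1 -> eval (hadamard f g) z w ->
  lam_image V g w.
Proof.
  intros Hb Hz Hw. destruct Hb as [[Hs ->]|[_ [Hf _]]].
  - rewrite (is_sum_unique _ _ _ Hw (eval_hadamard_e_one_l g z)).
    exists e_one. split; [apply Hs; auto|apply eval_hadamard_e_one_l].
  - destruct (Ceq_dec w (g 0%nat)) as [->|E].
    + now apply (lam_image_g0 f).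
    + now apply (lam_image_of_value f z w).
Qed.

Lemma lam_image_of_boundary w : boundaryC (lam_image V g) w -> lam_image V g w.
Proof.
  intros Hbd. apply NNPP. intros Hn.
  destruct (lam_image_dist_pos V g w V_compact g_Abar) as [d [Hd Hdist]].
  { intros f Hf E. apply Hn, (lam_image_lam V g _ V_A0 g_Abar). now exists f. }
  destruct (proj1 (Hbd d Hd)) as [u [Hu Hud]].
  destruct (proj1 (lam_image_lam V g u V_A0 g_Abar) Hu) as [h [Hh <-]].
  specialize (Hdist h Hh). lra.
Qed.

Lemma boundary_sub_border w : boundaryC (lam_image V g) w ->
  exists f, bor V f /\ exists z, Cmod z = 1 /\ eval (hadamard f g) z w.
Proof.
  intros Hbd.
  destruct (lam_image_sub_border w (lam_image_of_boundary w Hbd)) as [f [Hbf [z0 [Hz0 Hev]]]].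
  exists f. split; [auto|].
  destruct (Rle_lt_or_eq_dec _ _ Hz0) as [Hlt|Heq]; [|now exists z0].
  destruct (hadamard_abs_conv f g (bor_in_A V f V_A0 Hbf) g_Abar) as [rho [Hrho Hcv]].
  set (c := hadamard f g) in *.
  rewrite <- (eval_pval _ _ _ Hev) in *.
  destruct (classic (nonconstant (taylor c z0))) as [Hnc|Hconst].
  - exfalso.
    destruct (pval_open c rho z0 Hcv Hrho Hlt Hnc) as [delta [Hdelta Hopen]].
    destruct (proj2 (Hbd delta Hdelta)) as [c' [Hc'n Hc'w]].
    destruct (Hopen c' Hc'w) as [q [Hq Hqc]].
    apply Hc'n, (border_sub_lam_image c' f q Hbf ltac:(lra)).
    rewrite <- Hqc. apply pval_eval_abs_conv with rho; auto. lra.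
  - pose proof (not_nonconstant _ Hconst) as Hc1.
    destruct (exists_unit_near z0 Hz0) as [u [Hu Huz]].
    exists u. split; [auto|].
    rewrite <- (pval_taylor_const c rho z0 Hcv ltac:(lra) (u - z0) Hc1) by lra.
    replace (z0 + (u - z0))%C with u by ring.
    apply pval_eval_abs_conv with rho; auto. lra.
Qed.

End LambdaImage.

Theorem theorem5 (V : coef -> Prop)
  (HV0 : forall f, V f -> in_A0 f)
  (Hcomp : lu_compact V)
  (HT : complete (dualT V))
  (g : coef) (Hg : in_Abar g) :
  (forall w : C,
     lam_image V g w <->
     exists f, bor V f /\ exists z : C, Cmod z <= 1 /\ eval (hadamard f g) z w) /\
  (forall w : C,
     boundaryC (lam_image V g) w ->
     exists f, bor V f /\ exists z : C, Cmod z = 1 /\ eval (hadamard f g) z w).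
Proof.
  split.
  - intros w. split.
    + apply lam_image_sub_border; auto.
    + intros [f [Hb [z [Hz Hw]]]]. now apply (border_sub_lam_image V g HV0 Hcomp HT Hg w f z).
  - apply boundary_sub_border; auto.
Qed.
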